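(* Let the sequences be generated by Algorithm iMBA and suppose Assumptions 2, 3 and 4 hold. Then there exist $\widehat k\in\mathbb{N}$ and $\beta_{\overline\lambda}>0$ such that for each $k\ge\widehat k$ there is a vector $\overline\lambda^k\in\mathcal M(u^k,\overline x^k)$ with $\|\overline\lambda^k\|\le\beta_{\overline\lambda}$.
   Context: Problem (P): $\min_{x\in\mathbb{R}^n}F(x):=g_0(x)+\delta_{\mathbb{R}^m_-}(g(x))+\phi(x)$, where $g=(g_1,\dots,g_m)^\top$ and $\delta_{\mathbb{R}^m_-}$ is the indicator of the nonpositive orthant. Assumption 1 (standing): (i) $g_0:\mathbb{R}^n\to(-\infty,\infty]$ is locally Lipschitz and upper-$\mathcal C^2$ at every point of an open convex set $\mathcal O\supset\Gamma:=\{x:g(x)\in\mathbb{R}^m_-\}\neq\emptyset$, and each $g_i:\mathbb{R}^n\to\mathbb{R}$, $i\in[m]$, is locally Lipschitz and upper-$\mathcal C^2$ at every point of $\mathbb{R}^n$; (ii) $\phi:\mathbb{R}^n\to\mathbb{R}$ is convex and $F$ is bounded below on $\Gamma$. $\partial$ denotes the limiting subdifferential; $\partial g(x):=\{V\in\mathbb{R}^{n\times m}: V_i\in\partial g_i(x)\ \forall i\}$. Define $G(x,s,V,L):=g(s)+V^\top(x-s)+\tfrac12\|x-s\|^2L$. Algorithm iMBA (parameters $0<\mu_{\min}\le\mu_{\max}$, $0<L_{\min}\le L_{\max}$, $M,\beta_C,\beta_S,\alpha>0$, $\tau>1$, $x^0\in\Gamma$): at iteration $k$ choose $\xi^k\in\partial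 g_0(x^k)$, $V^k\in\partial g(x^k)$, $\mu_{k,0}\in[\mu_{\min},\mu_{\max}]$, $L^{k,0}\in[L_{\min},L_{\max}]^m$; for $j=0,1,\dots$ choose self-adjoint $\mathcal Q_{k,j}$ with $\mu_{k,j}\mathcal I\preceq\mathcal Q_{k,j}\preceq(\mu_{k,j}+M)\mathcal I$, let $F_{k,j}(x):=g_0(x^k)+\langle\xi^k,x-x^k\rangle+\frac12\langle x-x^k,\mathcal Q_{k,j}(x-x^k)\rangle+\phi(x)$, $\Gamma_{k,j}:=\{x:G(x,x^k,V^k,L^{k,j})\in\mathbb{R}^m_-\}$, $\overline x^{k,j}$ the unique minimizer of $F_{k,j}$ on $\Gamma_{k,j}$, and compute $y^{k,j}$, $v^{k,j}\in\partial\phi(y^{k,j})$, $\lambda^{k,j}\in\mathbb{R}^m_+$ with $F_{k,j}(y^{k,j})\le F_{k,j}(x^k)$, $(-\langle\lambda^{k,j},G(y^{k,j},x^k,V^k,L^{k,j})\rangle)_++\|[G(y^{k,j},x^k,V^k,L^{k,j})]_+\|_\infty\le\frac{\beta_C}2\|y^{k,j}-x^k\|^2$ and $\|\xi^k+\mathcal Q_{k,j}(y^{k,j}-x^k)+v^{k,j}+V^k\lambda^{k,j}+\langle L^{k,j},\lambda^{k,j}\rangle(y^{k,j}-x^k)\|\le\beta_S\|y^{k,j}-x^k\|$. If $g(y^{k,j})\in\mathbb{R}^m_-$ and $F(y^{k,j})\le F(x^k)-\frac\alpha2\|y^{k,j}-x^k\|^2$, accept ($j_k:=j$); else if $g(y^{k,j})\notin\mathbb{R}^m_-$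 set $L^{k,j+1}=\tau L^{k,j}$, $\mu_{k,j+1}=\mu_{k,j}$; else $L^{k,j+1}=L^{k,j}$, $\mu_{k,j+1}=\tau\mu_{k,j}$. Then $x^{k+1}:=y^{k,j_k}$, $(\mu_k,\mathcal Q_k,L^k,v^{k+1},\lambda^{k+1}):=(\mu_{k,j_k},\mathcal Q_{k,j_k},L^{k,j_k},v^{k,j_k},\lambda^{k,j_k})$, $\overline x^k:=\overline x^{k,j_k}$. Assumption 2: for each $k,j$, the multifunction $x\mapsto G(x,x^k,V^k,L^{k,j})-\mathbb{R}^m_-$ is metrically subregular at $(\overline x^{k,j},0)$. Assumption 3: $\{x^k\}$ is bounded; $\omega(x^0)$ denotes its set of cluster points. Parametric data: $\mathbb U:=\mathbb{R}^n\times\mathbb{R}^m_+\times\mathbb{R}^{n\times m}\times\mathbb{R}^n\times\mathbb S_+$ ($\mathbb S_+$ = positive semidefinite self-adjoint linear maps on $\mathbb{R}^n$); for $u=(s,L,V,\xi,\mathcal Q)$: $\theta(u,x):=g_0(s)+\langle\xi,x-s\rangle+\frac12\langle x-s,\mathcal Q(x-s)\rangle$, $H(u,x):=G(x,s,V,L)$, so $\nabla_xH(u,x)\lambda=V\lambda+\langle L,\lambda\rangle(x-s)$; $\mathcal S(u):=\{x:H(u,x)\in\mathbb{R}^m_-\}$; $\Lambda(u,x,y):=\{\lambda\in\mathcal N_{\mathbb{R}^m_-}(H(u,x)):\nabla_xH(u,x)\lambda=y\}$; $\mathcal M(u,x):=\{\lambda\in\mathcal N_{\mathbb{R}^m_-}(H(u,x)):0\in\nabla_x\theta(u,x)+\partial\phi(x)+\nabla_xH(u,x)\lambda\}$.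 The constraint system satisfies the partial bounded multiplier property (BMP) w.r.t. $x$ at $(u^*,x^* )$ with $x^*\in\mathcal S(u^* )$ if there exist $\kappa>0$ and a neighborhood $\mathcal U\times\mathcal V$ of $(u^*,x^* )$ such that for all $u\in\mathcal U$, $x\in\mathcal V\cap\mathcal S(u)$ and $y\in\mathcal N_{\mathcal S(u)}(x)$, $\Lambda(u,x,y)\cap\{\lambda:\|\lambda\|\le\kappa\|y\|\}\neq\emptyset$. Let $u^k:=(x^k,L^k,V^k,\xi^k,\mathcal Q_k)$. Assumption 4: the partial BMP w.r.t. $x$ holds at every cluster point of $\{(u^k,\overline x^k)\}_{k\in\mathbb{N}}$. *)

From HB Require Import structures.
From mathcomp Require Import all_boot all_order all_algebra.
From mathcomp Require Import boolp classical_sets reals constructive_ereal.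
Set Implicit Arguments. Unset Strict Implicit. Unset Printing Implicit Defensive.
Import Order.TTheory GRing.Theory Num.Theory.
Local Open Scope ring_scope.
Local Open Scope classical_set_scope.

Section IMBADefs.
Variable R : realType.

Definition mnorm p q (A : 'M[R]_(p, q)) : R := Num.sqrt (\sum_i \sum_j A i j ^+ 2).
Definition dot p (a b : 'cV[R]_p) : R := \sum_i a i 0 * b i 0.
Definition infnorm p (a : 'cV[R]_p) : R := \big[Num.max/0]_i `|a i 0|.
Definition pospart p (a : 'cV[R]_p) : 'cV[R]_p := map_mx (fun t => Num.max t 0) a.
Definition nonpos p (a : 'cV[R]_p) : Prop := forall i, a i 0 <= 0.

Definition mx_cvg p q (u : nat -> 'M[R]_(p, q)) (l : 'M[R]_(p, q)) : Prop :=
  forall eps, 0 < eps -> exists N, forall k, (N <= k)%N -> mnorm (u k - l) < eps.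
Definition r_cvg (u : nat -> R) (l : R) : Prop :=
  forall eps, 0 < eps -> exists N, forall k, (N <= k)%N -> `|u k - l| < eps.

Definition rsubdiff p (f : 'cV[R]_p -> R) (x w : 'cV[R]_p) : Prop :=
  forall eps, 0 < eps -> exists2 d, 0 < d &
    forall y, mnorm (y - x) < d -> f x + dot w (y - x) - eps * mnorm (y - x) <= f y.
Definition lsubdiff p (f : 'cV[R]_p -> R) (x w : 'cV[R]_p) : Prop :=
  exists (xs ws : nat -> 'cV[R]_p),
    [/\ mx_cvg xs x, r_cvg (f \o xs) (f x),
        (forall k, rsubdiff f (xs k) (ws k)) & mx_cvg ws w].
Definition rncone p (C : set 'cV[R]_p) (x w : 'cV[R]_p) : Prop :=
  C x /\ forall eps, 0 < eps -> exists2 d, 0 < d &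
    forall z, C z -> mnorm (z - x) < d -> dot w (z - x) <= eps * mnorm (z - x).
Definition ncone p (C : set 'cV[R]_p) (x w : 'cV[R]_p) : Prop :=
  C x /\ exists (xs ws : nat -> 'cV[R]_p),
    [/\ (forall k, C (xs k)), mx_cvg xs x,
        (forall k, rncone C (xs k) (ws k)) & mx_cvg ws w].
Definition dist_le p (A : set 'cV[R]_p) (x : 'cV[R]_p) (c : R) : Prop :=
  forall eps, 0 < eps -> exists2 z, A z & mnorm (x - z) < c + eps.
Definition msubreg p q (S : 'cV[R]_p -> set 'cV[R]_q) (xb : 'cV[R]_p) (yb : 'cV[R]_q)
  : Prop :=
  S xb yb /\ exists2 kappa, 0 <= kappa & exists2 d, 0 < d &
    forall x, mnorm (x - xb) < d -> forall w, S x w ->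
      dist_le [set z | S z yb] x (kappa * mnorm (yb - w)).

Definition loc_lipschitz p (f : 'cV[R]_p -> R) (x : 'cV[R]_p) : Prop :=
  exists2 d, 0 < d & exists c, forall y z,
    mnorm (y - x) < d -> mnorm (z - x) < d -> `|f y - f z| <= c * mnorm (y - z).
(* upper-C^2 at x: f - (rho/2)||.||^2 is concave on a neighbourhood of x
   (Rockafellar--Wets, Thm 10.33 characterization) *)
Definition upper_C2 p (f : 'cV[R]_p -> R) (x : 'cV[R]_p) : Prop :=
  exists2 d, 0 < d & exists2 rho, 0 <= rho &
    forall y z t, mnorm (y - x) < d -> mnorm (z - x) < d -> 0 <= t <= 1 ->
      let h w := f w - rho / 2 * mnorm w ^+ 2 in
      t * h y + (1 - t) * h z <= h (t *: y + (1 - t) *: z).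
Definition convex_fun p (f : 'cV[R]_p -> R) : Prop :=
  forall y z t, 0 <= t <= 1 -> f (t *: y + (1 - t) *: z) <= t * f y + (1 - t) * f z.
Definition open_set p (O : set 'cV[R]_p) : Prop :=
  forall x, O x -> exists2 d, 0 < d & forall y, mnorm (y - x) < d -> O y.
Definition convex_set p (O : set 'cV[R]_p) : Prop :=
  forall x y t, O x -> O y -> 0 <= t <= 1 -> O (t *: x + (1 - t) *: y).

Variables n m : nat.

Definition gvec (g : 'I_m -> 'cV[R]_n -> R) (x : 'cV[R]_n) : 'cV[R]_m := \col_i g i x.
Definition lsubdiff_mx (g : 'I_m -> 'cV[R]_n -> R) (x : 'cV[R]_n) (V : 'M[R]_(n, m))
  : Prop := forall i, lsubdiff (g i) x (col i V).
Definition Fobj (g0 : 'cV[R]_n -> \bar R) (g : 'I_m -> 'cV[R]_n -> R)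
  (phi : 'cV[R]_n -> R) (x : 'cV[R]_n) : \bar R :=
  (g0 x + (if `[< nonpos (gvec g x) >] then 0 else +oo) + (phi x)%:E)%E.
(* G(x,s,V,L) = g(s) + V^T (x - s) + 1/2 ||x - s||^2 L  (also H(u,x)) *)
Definition Gfun (g : 'I_m -> 'cV[R]_n -> R) (x s : 'cV[R]_n) (V : 'M[R]_(n, m))
  (L : 'cV[R]_m) : 'cV[R]_m :=
  gvec g s + V^T *m (x - s) + (2^-1 * mnorm (x - s) ^+ 2) *: L.
(* F_{k,j}(x) with g0x = g0(x^k), xk = x^k *)
Definition Fkj (g0x : R) (xk xi : 'cV[R]_n) (Q : 'M[R]_n) (phi : 'cV[R]_n -> R)
  (x : 'cV[R]_n) : R :=
  g0x + dot xi (x - xk) + 2^-1 * dot (x - xk) (Q *m (x - xk)) + phi x.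

(* ---------- parametric data, u = (s, L, V, xi, Q) ---------- *)
Definition gradH (s : 'cV[R]_n) (V : 'M[R]_(n, m)) (L : 'cV[R]_m) (x : 'cV[R]_n)
  (lam : 'cV[R]_m) : 'cV[R]_n := V *m lam + dot L lam *: (x - s).
Definition Sset g (s : 'cV[R]_n) V L : set 'cV[R]_n :=
  [set x | nonpos (Gfun g x s V L)].
Definition Lam g (s : 'cV[R]_n) V L (x yv : 'cV[R]_n) : set 'cV[R]_m :=
  [set lam | ncone (@nonpos m) (Gfun g x s V L) lam /\ gradH s V L x lam = yv].
(* M(u,x); nabla_x theta(u,x) = xi + Q (x - s) *)
Definition Mset g (phi : 'cV[R]_n -> R) (s : 'cV[R]_n) (L : 'cV[R]_m) V
  (xi : 'cV[R]_n) (Q : 'M[R]_n) (x : 'cV[R]_n) : set 'cV[R]_m :=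
  [set lam | ncone (@nonpos m) (Gfun g x s V L) lam /\
     exists2 w, lsubdiff phi x w & xi + Q *m (x - s) + w + gradH s V L x lam = 0].
Definition inU (L : 'cV[R]_m) (Q : 'M[R]_n) : Prop :=
  [/\ forall i, 0 <= L i 0, Q^T = Q & forall d, 0 <= dot d (Q *m d)].
Definition bmp g (s0 : 'cV[R]_n) (L0 : 'cV[R]_m) (V0 : 'M[R]_(n, m))
  (xi0 : 'cV[R]_n) (Q0 : 'M[R]_n) (x0 : 'cV[R]_n) : Prop :=
  exists2 kappa, 0 < kappa & exists2 d, 0 < d &
    forall s L V xi Q, inU L Q ->
      mnorm (s - s0) < d -> mnorm (L - L0) < d -> mnorm (V - V0) < d ->
      mnorm (xi - xi0) < d -> mnorm (Q - Q0) < d ->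
      forall x, Sset g s V L x -> mnorm (x - x0) < d ->
      forall yv, ncone (Sset g s V L) x yv ->
        exists2 lam, Lam g s V L x yv lam & mnorm lam <= kappa * mnorm yv.
Definition cluster_pt (sx : nat -> 'cV[R]_n) (sL : nat -> 'cV[R]_m)
  (sV : nat -> 'M[R]_(n, m)) (sxi : nat -> 'cV[R]_n) (sQ : nat -> 'M[R]_n)
  (sxb : nat -> 'cV[R]_n) s0 L0 V0 xi0 Q0 x0 : Prop :=
  forall eps, 0 < eps -> forall N, exists2 k, (N <= k)%N &
    mnorm (sx k - s0) < eps /\ mnorm (sL k - L0) < eps /\ mnorm (sV k - V0) < eps /\
    mnorm (sxi k - xi0) < eps /\ mnorm (sQ k - Q0) < eps /\ mnorm (sxb k - x0) < eps.

Record standing_assumption (g0 : 'cV[R]_n -> \bar R) (g : 'I_m -> 'cV[R]_n -> R)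
  (phi : 'cV[R]_n -> R) (O : set 'cV[R]_n) : Prop := {
  sa_g0_codom : forall x, g0 x != -oo%E;
  sa_open : open_set O;
  sa_convex : convex_set O;
  sa_Gamma_sub : forall x, nonpos (gvec g x) -> O x;
  sa_Gamma_ne : exists x, nonpos (gvec g x);
  sa_g0_fin : forall x, O x -> g0 x \is a fin_num;
  sa_g0_lip : forall x, O x -> loc_lipschitz (fun z => fine (g0 z)) x;
  sa_g0_uC2 : forall x, O x -> upper_C2 (fun z => fine (g0 z)) x;
  sa_g_lip : forall i x, loc_lipschitz (g i) x;
  sa_g_uC2 : forall i x, upper_C2 (g i) x;
  sa_phi_cvx : convex_fun phi;
  sa_F_lb : exists c, forall x, nonpos (gvec g x) -> (c%:E <= Fobj g0 g phi x)%E
}.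

Definition accepted g0 g phi (alpha : R) (xk ykj : 'cV[R]_n) : Prop :=
  nonpos (gvec g ykj) /\
  (Fobj g0 g phi ykj <= Fobj g0 g phi xk - (alpha / 2 * mnorm (ykj - xk) ^+ 2)%:E)%E.

Record iMBA_run (g0 : 'cV[R]_n -> \bar R) (g : 'I_m -> 'cV[R]_n -> R)
  (phi : 'cV[R]_n -> R)
  (mumin mumax Lmin Lmax Mq betaC betaS alpha tau : R)
  (x xi : nat -> 'cV[R]_n) (V : nat -> 'M[R]_(n, m))
  (mu : nat -> nat -> R) (L : nat -> nat -> 'cV[R]_m) (Q : nat -> nat -> 'M[R]_n)
  (xbar y v : nat -> nat -> 'cV[R]_n) (lam : nat -> nat -> 'cV[R]_m)
  (jk : nat -> nat) : Prop := {
  it_mu : 0 < mumin <= mumax;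
  it_L : 0 < Lmin <= Lmax;
  it_M : 0 < Mq;
  it_betaC : 0 < betaC;
  it_betaS : 0 < betaS;
  it_alpha : 0 < alpha;
  it_tau : 1 < tau;
  it_x0 : nonpos (gvec g (x 0%N));
  it_xi : forall k, lsubdiff (fun z => fine (g0 z)) (x k) (xi k);
  it_V : forall k, lsubdiff_mx g (x k) (V k);
  it_mu0 : forall k, mumin <= mu k 0%N <= mumax;
  it_L0 : forall k i, Lmin <= L k 0%N i 0 <= Lmax;
  it_inner : forall k j, (j <= jk k)%N ->
    let Fk := Fkj (fine (g0 (x k))) (x k) (xi k) (Q k j) phi in
    let Gy := Gfun g (y k j) (x k) (V k) (L k j) in
    [/\ (Q k j)^T = Q k j /\
        (forall d, mu k j * mnorm d ^+ 2 <= dot d (Q k j *m d) <= (mu k j + Mq) * mnorm d ^+ 2),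
        [/\ Sset g (x k) (V k) (L k j) (xbar k j),
            (forall z, Sset g (x k) (V k) (L k j) z -> Fk (xbar k j) <= Fk z) &
            (forall z, Sset g (x k) (V k) (L k j) z ->
               (forall z', Sset g (x k) (V k) (L k j) z' -> Fk z <= Fk z') -> z = xbar k j)],
        lsubdiff phi (y k j) (v k j) /\ (forall i, 0 <= lam k j i 0),
        Fk (y k j) <= Fk (x k) /\
        Num.max (- dot (lam k j) Gy) 0 + infnorm (pospart Gy)
          <= betaC / 2 * mnorm (y k j - x k) ^+ 2 &
        mnorm (xi k + Q k j *m (y k j - x k) + v k j + V k *m lam k j
               + dot (L k j) (lam k j) *: (y k j - x k))
          <= betaS * mnorm (y k j - x k)];
  it_reject : forall k j, (j < jk k)%N ->
    ~ accepted g0 g phi alpha (x k) (y k j) /\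
    (if `[< nonpos (gvec g (y k j)) >]
     then L k j.+1 = L k j /\ mu k j.+1 = tau * mu k j
     else L k j.+1 = tau *: L k j /\ mu k j.+1 = mu k j);
  it_accept : forall k, accepted g0 g phi alpha (x k) (y k (jk k));
  it_next : forall k, x k.+1 = y k (jk k)
}.

End IMBADefs.

From HB Require Import structures.
From mathcomp Require Import all_boot all_order all_algebra.
From mathcomp Require Import boolp classical_sets reals constructive_ereal.
From mathcomp Require Import ring lra zify.
Import Order.TTheory GRing.Theory Num.Theory.
Local Open Scope ring_scope.
Local Open Scope classical_set_scope.
Set Implicit Arguments. Unset Strict Implicit. Unset Printing Implicit Defensive.

(* Along the accepted iterates the data [u^k = (x^k, L^k, V^k, xi^k, Q_k)] and the
   subproblem solutions [xbar^k] stay bounded: [xi^k] and [V^k] are subgradients of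
   functions that are Lipschitz uniformly on bounded feasible sets, and upper-C^2
   regularity gives quadratic upper models of [g_0] and [g] around [x^k] with uniform
   constants [C_g0], [C_g], so the inner loop stops enlarging [L] once
   [L >= beta_C + 2 C_g] and stops enlarging [mu] once [mu >= alpha + 2 C_g0].
   As [L^k >= 0] the constraint set [S(u^k)] is convex, so the optimality of [xbar^k]
   gives [w] in [dphi(xbar^k)] making [y^k := -(xi^k + Q_k (xbar^k - x^k) + w)] a
   bounded normal to [S(u^k)] at [xbar^k]; every element of [Lambda(u^k, xbar^k, y^k)]
   then lies in [M(u^k, xbar^k)].  If the multipliers were not eventually bounded, bad
   indices would have a subsequence converging to a cluster point, where the bounded
   multiplier property gives multipliers of norm at most [kappa ||y^k||]. *)

Section Frobenius.
Variable R : realType.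
Implicit Types (p q : nat).

Definition mdot p q (A B : 'M[R]_(p, q)) : R := \sum_i \sum_j A i j * B i j.

Lemma mdotC p q (A B : 'M[R]_(p, q)) : mdot A B = mdot B A.
Proof. by apply: eq_bigr => i _; apply: eq_bigr => j _; rewrite mulrC. Qed.

Lemma mdotDl p q (A B C : 'M[R]_(p, q)) : mdot (A + B) C = mdot A C + mdot B C.
Proof.
rewrite /mdot -big_split; apply: eq_bigr => i _; rewrite -big_split.
by apply: eq_bigr => j _; rewrite mxE mulrDl.
Qed.

Lemma mdotZl p q c (A B : 'M[R]_(p, q)) : mdot (c *: A) B = c * mdot A B.
Proof.
rewrite /mdot mulr_sumr; apply: eq_bigr => i _; rewrite mulr_sumr.
by apply: eq_bigr => j _; rewrite mxE mulrA.
Qed.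

Lemma mdotNl p q (A B : 'M[R]_(p, q)) : mdot (- A) B = - mdot A B.
Proof. by rewrite -scaleN1r mdotZl mulN1r. Qed.

Lemma mdotBl p q (A B C : 'M[R]_(p, q)) : mdot (A - B) C = mdot A C - mdot B C.
Proof. by rewrite mdotDl mdotNl. Qed.

Lemma mdotDr p q (A B C : 'M[R]_(p, q)) : mdot C (A + B) = mdot C A + mdot C B.
Proof. by rewrite mdotC mdotDl !(mdotC C). Qed.

Lemma mdotZr p q c (A B : 'M[R]_(p, q)) : mdot B (c *: A) = c * mdot B A.
Proof. by rewrite mdotC mdotZl mdotC. Qed.

Lemma mdotNr p q (A B : 'M[R]_(p, q)) : mdot B (- A) = - mdot B A.
Proof. by rewrite mdotC mdotNl mdotC. Qed.

Lemma mdotBr p q (A B C : 'M[R]_(p, q)) : mdot C (A - B) = mdot C A - mdot C B.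
Proof. by rewrite mdotDr mdotNr. Qed.

Lemma mdot0l p q (A : 'M[R]_(p, q)) : mdot 0 A = 0.
Proof. by rewrite -(scale0r 0) mdotZl mul0r. Qed.

Lemma mdot0r p q (A : 'M[R]_(p, q)) : mdot A 0 = 0.
Proof. by rewrite mdotC mdot0l. Qed.

Lemma mdot_ge0 p q (A : 'M[R]_(p, q)) : 0 <= mdot A A.
Proof. by apply: sumr_ge0 => i _; apply: sumr_ge0 => j _; rewrite -expr2 sqr_ge0. Qed.

Lemma mnorm_sqr p q (A : 'M[R]_(p, q)) : mnorm A ^+ 2 = mdot A A.
Proof.
rewrite /mnorm sqr_sqrtr; last exact: mdot_ge0.
by apply: eq_bigr => i _; apply: eq_bigr => j _; rewrite expr2.
Qed.

Lemma mnorm_ge0 p q (A : 'M[R]_(p, q)) : 0 <= mnorm A.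
Proof. exact: sqrtr_ge0. Qed.

Lemma mnormE p q (A : 'M[R]_(p, q)) : mnorm A = Num.sqrt (mdot A A).
Proof. by rewrite -mnorm_sqr sqrtr_sqr ger0_norm ?mnorm_ge0. Qed.

Lemma mnorm_le p q (A : 'M[R]_(p, q)) c : 0 <= c -> mdot A A <= c ^+ 2 -> mnorm A <= c.
Proof. by move=> c0 h; rewrite mnormE -(ger0_norm c0) -sqrtr_sqr ler_wsqrtr. Qed.

Lemma mnorm_eq0 p q (A : 'M[R]_(p, q)) : (mnorm A == 0) = (A == 0).
Proof.
apply/eqP/eqP => [h|->]; last by rewrite mnormE mdot0l sqrtr0.
have /eqP : mdot A A = 0 by rewrite -mnorm_sqr h expr0n.
rewrite psumr_eq0 => [/allP hi|i _]; last first.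
  by apply: sumr_ge0 => j _; rewrite -expr2 sqr_ge0.
apply/matrixP => i j; rewrite mxE.
move: (hi i (mem_index_enum _)); rewrite psumr_eq0 => [/allP /(_ j (mem_index_enum _))|k _].
  by rewrite -expr2 sqrf_eq0 => /eqP.
by rewrite -expr2 sqr_ge0.
Qed.

Lemma mnorm0 p q : mnorm (0 : 'M[R]_(p, q)) = 0.
Proof. by apply/eqP; rewrite mnorm_eq0. Qed.

Lemma mnorm_gt0 p q (A : 'M[R]_(p, q)) : (0 < mnorm A) = (A != 0).
Proof. by rewrite lt0r mnorm_ge0 andbT mnorm_eq0. Qed.

Lemma mdot_le p q (A B : 'M[R]_(p, q)) : mdot A B <= mnorm A * mnorm B.
Proof.
set a := mnorm A; set b := mnorm B.
have [->|A0] := eqVneq A 0; first by rewrite mdot0l mulr_ge0 ?mnorm_ge0.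
have [->|B0] := eqVneq B 0; first by rewrite mdot0r mulr_ge0 ?mnorm_ge0.
have ab : 0 < a * b by rewrite mulr_gt0 ?mnorm_gt0.
have := mdot_ge0 (b *: A - a *: B).
rewrite !(mdotBl, mdotBr, mdotZl, mdotZr) -!mnorm_sqr -/a -/b (mdotC B A) => h.
have : 0 <= (a * b) * (a * b - mdot A B) by nra.
by rewrite pmulr_rge0 // subr_ge0.
Qed.

Lemma mnormZ p q c (A : 'M[R]_(p, q)) : mnorm (c *: A) = `|c| * mnorm A.
Proof. by rewrite !mnormE mdotZl mdotZr mulrA -expr2 sqrtrM ?sqr_ge0 // sqrtr_sqr. Qed.

Lemma mnormN p q (A : 'M[R]_(p, q)) : mnorm (- A) = mnorm A.
Proof. by rewrite -scaleN1r mnormZ normrN normr1 mul1r. Qed.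

Lemma mnormB p q (A B : 'M[R]_(p, q)) : mnorm (A - B) = mnorm (B - A).
Proof. by rewrite -mnormN opprB. Qed.

Lemma normr_mdot_le p q (A B : 'M[R]_(p, q)) : `|mdot A B| <= mnorm A * mnorm B.
Proof.
rewrite ler_norml mdot_le andbT lerNl -mdotNl.
by apply: le_trans (mdot_le _ _) _; rewrite mnormN.
Qed.

Lemma mnormD p q (A B : 'M[R]_(p, q)) : mnorm (A + B) <= mnorm A + mnorm B.
Proof.
apply: mnorm_le; first by rewrite addr_ge0 ?mnorm_ge0.
rewrite mdotDl !mdotDr (mdotC B A) -!mnorm_sqr.
have := mdot_le A B; nra.
Qed.

Lemma mnorm_tri p q (A B C : 'M[R]_(p, q)) :
  mnorm (A - C) <= mnorm (A - B) + mnorm (B - C).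
Proof. by apply: le_trans (mnormD _ _); rewrite addrA subrK. Qed.

Lemma mnorm_le_add p q (A B : 'M[R]_(p, q)) : mnorm A <= mnorm B + mnorm (A - B).
Proof. by apply: le_trans (mnormD _ _); rewrite addrC subrK. Qed.

Lemma normr_entry_le p q (A : 'M[R]_(p, q)) i j : `|A i j| <= mnorm A.
Proof.
rewrite -(ger0_norm (mnorm_ge0 A)) -ler_sqr ?nnegrE ?normr_ge0 //.
rewrite !real_normK ?num_real // mnorm_sqr /mdot (bigD1 i) //= (bigD1 j) //=.
rewrite -expr2 -addrA lerDl addr_ge0 //; first by apply: sumr_ge0 => k _; rewrite -expr2 sqr_ge0.
by apply: sumr_ge0 => k _; apply: sumr_ge0 => l _; rewrite -expr2 sqr_ge0.
Qed.

Lemma mnorm_le_entries p q (A : 'M[R]_(p, q)) e : 0 <= e ->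
  (forall i j, `|A i j| <= e) -> mnorm A <= (p * q)%:R * e.
Proof.
move=> e0 h; apply: mnorm_le; first by rewrite mulr_ge0 ?ler0n.
apply: (@le_trans _ _ (\sum_(i < p) \sum_(j < q) e ^+ 2)).
  apply: ler_sum => i _; apply: ler_sum => j _; rewrite -expr2.
  by rewrite -real_normK ?num_real // ler_sqr ?nnegrE ?normr_ge0.
rewrite !sumr_const !card_ord -mulrnA -[e ^+ 2 *+ _]mulr_natl exprMn -natrX.
by rewrite ler_wpM2r ?sqr_ge0 // ler_nat; nia.
Qed.

Lemma sum_mul_sqr_le r (a b : 'I_r -> R) :
  (\sum_k a k * b k) ^+ 2 <= (\sum_k a k ^+ 2) * (\sum_k b k ^+ 2).
Proof.
pose A : 'cV[R]_r := \col_k a k; pose B : 'cV[R]_r := \col_k b k.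
have E (u w : 'cV[R]_r) : mdot u w = \sum_k u k 0 * w k 0.
  by apply: eq_bigr => k _; rewrite big_ord1.
have : `|mdot A B| ^+ 2 <= (mnorm A * mnorm B) ^+ 2.
  by rewrite ler_sqr ?nnegrE ?normr_ge0 ?mulr_ge0 ?mnorm_ge0 ?normr_mdot_le.
rewrite real_normK ?num_real // exprMn !mnorm_sqr !E.
have -> : \sum_k A k 0 * B k 0 = \sum_k a k * b k by apply: eq_bigr => k _; rewrite !mxE.
have -> : \sum_k A k 0 * A k 0 = \sum_k a k ^+ 2 by apply: eq_bigr => k _; rewrite !mxE expr2.
by have -> : \sum_k B k 0 * B k 0 = \sum_k b k ^+ 2 by apply: eq_bigr => k _; rewrite !mxE expr2.
Qed.

Lemma mnorm_mulmx p q r (A : 'M[R]_(p, q)) (B : 'M[R]_(q, r)) :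
  mnorm (A *m B) <= mnorm A * mnorm B.
Proof.
apply: mnorm_le; first by rewrite mulr_ge0 ?mnorm_ge0.
rewrite exprMn !mnorm_sqr.
apply: (@le_trans _ _ (\sum_i \sum_j ((\sum_k A i k ^+ 2) * (\sum_k B k j ^+ 2)))).
  by apply: ler_sum => i _; apply: ler_sum => j _; rewrite mxE -expr2 sum_mul_sqr_le.
rewrite /mdot mulr_suml; apply: ler_sum => i _.
rewrite -mulr_sumr le_eqVlt; apply/orP; left; apply/eqP; congr (_ * _).
by rewrite exchange_big /=; apply: eq_bigr => j _; apply: eq_bigr => k _; rewrite expr2.
Qed.

End Frobenius.

Section Dot.
Variable R : realType.
Implicit Types (p q : nat).

Lemma dotE p (a b : 'cV[R]_p) : dot a b = mdot a b.
Proof. by apply: eq_bigr => i _; rewrite big_ord1. Qed.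

Lemma dot_sqr p (a : 'cV[R]_p) : dot a a = mnorm a ^+ 2.
Proof. by rewrite dotE mnorm_sqr. Qed.

Lemma dotC p (a b : 'cV[R]_p) : dot a b = dot b a.
Proof. by rewrite !dotE mdotC. Qed.

Lemma normr_dot_le p (a b : 'cV[R]_p) : `|dot a b| <= mnorm a * mnorm b.
Proof. by rewrite dotE normr_mdot_le. Qed.

Lemma dotDl p (a b c : 'cV[R]_p) : dot (a + b) c = dot a c + dot b c.
Proof. by rewrite !dotE mdotDl. Qed.
Lemma dotDr p (a b c : 'cV[R]_p) : dot c (a + b) = dot c a + dot c b.
Proof. by rewrite !dotE mdotDr. Qed.
Lemma dotBl p (a b c : 'cV[R]_p) : dot (a - b) c = dot a c - dot b c.
Proof. by rewrite !dotE mdotBl. Qed.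
Lemma dotBr p (a b c : 'cV[R]_p) : dot c (a - b) = dot c a - dot c b.
Proof. by rewrite !dotE mdotBr. Qed.
Lemma dotNl p (a c : 'cV[R]_p) : dot (- a) c = - dot a c.
Proof. by rewrite !dotE mdotNl. Qed.
Lemma dotNr p (a c : 'cV[R]_p) : dot c (- a) = - dot c a.
Proof. by rewrite !dotE mdotNr. Qed.
Lemma dotZl p k (a c : 'cV[R]_p) : dot (k *: a) c = k * dot a c.
Proof. by rewrite !dotE mdotZl. Qed.
Lemma dotZr p k (a c : 'cV[R]_p) : dot c (k *: a) = k * dot c a.
Proof. by rewrite !dotE mdotZr. Qed.
Lemma dot0l p (a : 'cV[R]_p) : dot 0 a = 0.
Proof. by rewrite dotE mdot0l. Qed.
Lemma dot0r p (a : 'cV[R]_p) : dot a 0 = 0.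
Proof. by rewrite dotE mdot0r. Qed.

Lemma dot_mulmx p q (a : 'cV[R]_p) (A : 'M[R]_(p, q)) (b : 'cV[R]_q) :
  dot a (A *m b) = dot (A^T *m a) b.
Proof.
rewrite /dot; under eq_bigr do rewrite mxE mulr_sumr.
rewrite exchange_big /=; apply: eq_bigr => j _.
by rewrite mxE mulr_suml; apply: eq_bigr => i _; rewrite !mxE; ring.
Qed.

Lemma dot_delta p (a : 'cV[R]_p) i : dot a (delta_mx i 0) = a i 0.
Proof.
rewrite /dot (bigD1 i) //= big1 ?addr0; first by rewrite mxE !eqxx mulr1.
by move=> j hj; rewrite mxE (negbTE hj) mulr0.
Qed.

Lemma sqr_mnormD p (a b : 'cV[R]_p) :
  mnorm (a + b) ^+ 2 = mnorm a ^+ 2 + 2 * dot a b + mnorm b ^+ 2.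
Proof. by rewrite -!dot_sqr dotDl !dotDr (dotC b a); ring. Qed.

Lemma sqr_mnormB p (a b : 'cV[R]_p) :
  mnorm (a - b) ^+ 2 = mnorm a ^+ 2 - 2 * dot a b + mnorm b ^+ 2.
Proof. by rewrite sqr_mnormD dotNr mnormN; ring. Qed.

Lemma sqr_mnorm_convex p (a b : 'cV[R]_p) t :
  mnorm (t *: a + (1 - t) *: b) ^+ 2 =
  t * mnorm a ^+ 2 + (1 - t) * mnorm b ^+ 2 - t * (1 - t) * mnorm (a - b) ^+ 2.
Proof.
rewrite sqr_mnormB sqr_mnormD !mnormZ dotZl dotZr !exprMn !real_normK ?num_real //.
ring.
Qed.

Lemma mnorm_scale_unit p (u : 'cV[R]_p) t : u != 0 -> 0 <= t ->
  mnorm ((t / mnorm u) *: u) = t.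
Proof.
move=> u0 t0; have hu : 0 < mnorm u by rewrite mnorm_gt0.
by rewrite mnormZ ger0_norm ?divr_ge0 ?mnorm_ge0 // divfK // lt0r_neq0.
Qed.

Lemma dot_delta_mulmx p (A : 'M[R]_p) a b :
  dot (delta_mx a 0) (A *m delta_mx b 0) = A a b.
Proof.
rewrite dotC dot_delta mxE (bigD1 b) //= big1 ?addr0; first by rewrite mxE !eqxx mulr1.
by move=> i hi; rewrite mxE (negbTE hi) mulr0.
Qed.

Lemma psd_entry_le p (A : 'M[R]_p) c : A^T = A ->
  (forall d, 0 <= dot d (A *m d)) -> (forall a, A a a <= c) -> forall a b, `|A a b| <= c.
Proof.
move=> hs hpos hd a b; have Hs : A b a = A a b by rewrite -{1}hs mxE.
have h1 := hpos (delta_mx a 0 + delta_mx b 0).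
have h2 := hpos (delta_mx a 0 - delta_mx b 0).
rewrite ?mulmxDr ?mulmxN ?dotDl ?dotDr ?dotNl ?dotNr !dot_delta_mulmx Hs in h1 h2.
have := hd a; have := hd b; rewrite ler_norml; lra.
Qed.

End Dot.

Section Compactness.
Variable R : realType.

Definition increasing (s : nat -> nat) := forall k, (s k < s k.+1)%N.

Lemma increasing_ge s : increasing s -> forall k, (k <= s k)%N.
Proof. by move=> h; elim=> [|k IH] //; apply: leq_ltn_trans IH (h k). Qed.

Lemma increasing_mono s : increasing s -> {homo s : i j / (i <= j)%N}.
Proof.
move=> h i j /subnKC <-; elim: (j - i)%N => [|d IH]; first by rewrite addn0.
by rewrite addnS; apply: leq_trans IH (ltnW (h _)).
Qed.

Lemma increasing_comp s t : increasing s -> increasing t -> increasing (s \o t).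
Proof. by move=> hs ht k /=; apply: leq_trans (hs _) _; apply: increasing_mono (ht k). Qed.

Lemma r_cvg_sub (u : nat -> R) l s : increasing s -> r_cvg u l -> r_cvg (u \o s) l.
Proof.
move=> hs h e e0; have [N hN] := h e e0; exists N => k hk.
by apply: hN; apply: leq_trans hk (increasing_ge hs k).
Qed.

Lemma mx_cvg_sub p q (u : nat -> 'M[R]_(p, q)) l s :
  increasing s -> mx_cvg u l -> mx_cvg (u \o s) l.
Proof.
move=> hs h e e0; have [N hN] := h e e0; exists N => k hk.
by apply: hN; apply: leq_trans hk (increasing_ge hs k).
Qed.

Lemma ltr_inv_nat (e : R) : 0 < e -> exists N : nat, N.+1%:R^-1 < e.
Proof. by move=> /ltr_add_invr [k]; rewrite add0r => h; exists k. Qed.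

Lemma ler_inv_nat (i j : nat) : (i <= j)%N -> j.+1%:R^-1 <= i.+1%:R^-1 :> R.
Proof. by move=> hij; rewrite lef_pV2 ?posrE ?ltr0Sn // ler_nat ltnS. Qed.

(* The upper limit sup{y | y <= u j infinitely often} is a cluster value. *)
Lemma bounded_real_cluster (u : nat -> R) C : (forall j, `|u j| <= C) ->
  exists c, forall e, 0 < e -> forall N, exists2 j, (N <= j)%N & `|u j - c| < e.
Proof.
move=> hC.
pose S := [set y : R | forall N, exists2 j, (N <= j)%N & y <= u j].
have SC : S (- C) by move=> N; exists N => //; move: (hC N); rewrite ler_norml => /andP[].
have hS : has_sup S.
  split; first by exists (- C).
  exists C => y Sy; have [j _ hj] := Sy 0%N; apply: le_trans hj _.
  by move: (hC j); rewrite ler_norml => /andP[].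
exists (sup S) => e e0 N.
have e2 : 0 < e / 2 by rewrite divr_gt0.
have [y Sy hy] := sup_adherent e2 hS.
have [N0 hN0] : exists N0, forall j, (N0 <= j)%N -> u j < sup S + e / 2.
  apply: contrapT => hn.
  suff /(sup_upper_bound hS) /= : S (sup S + e / 2) by lra.
  move=> N1; move/forallNP: hn => /(_ N1) /existsNP [j /not_implyP [hj hlt]].
  by exists j => //; rewrite leNgt; apply/negP.
have [j hj hyj] := Sy (maxn N N0).
exists j; first by apply: leq_trans hj; rewrite leq_maxl.
have := hN0 j (leq_trans (leq_maxr _ _) hj); rewrite ltr_norml => h.
by apply/andP; split; lra.
Qed.

Lemma bounded_real_cvg_subseq (u : nat -> R) C : (forall j, `|u j| <= C) ->
  exists2 s, increasing s & exists l, r_cvg (u \o s) l.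
Proof.
move=> /bounded_real_cluster [c hc].
have hp (Nk : nat * nat) : exists j, (Nk.1 <= j)%N /\ `|u j - c| < Nk.2.+1%:R^-1.
  have hk : 0 < Nk.2.+1%:R^-1 :> R by rewrite invr_gt0 ltr0Sn.
  by have [j ? ?] := hc _ hk Nk.1; exists j.
have [f hf] := choice hp.
pose s := fix s k := if k is k'.+1 then f ((s k').+1, k) else f (0%N, 0%N).
have hs k : `|u (s k) - c| < k.+1%:R^-1.
  by case: k => [|k] /=; [case: (hf (0, 0)%N) | case: (hf ((s k).+1, k.+1))].
exists s; first by move=> k /=; have [] := hf ((s k).+1, k.+1).
exists c => e e0; have [N hN] := ltr_inv_nat e0.
exists N => k hk; apply: lt_le_trans (hs k) _.
exact: le_trans (ler_inv_nat hk) (ltW hN).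
Qed.

Lemma bounded_reals_cvg_subseq (T : eqType) (st : seq T) (f : T -> nat -> R) C :
  (forall t k, `|f t k| <= C) ->
  exists2 s, increasing s & forall t, t \in st -> exists l, r_cvg (f t \o s) l.
Proof.
move=> hC; elim: st => [|t st [s hs IH]]; first by exists id.
have [s' hs' [l hl]] := bounded_real_cvg_subseq (fun k => hC t (s k)).
exists (s \o s'); first exact: increasing_comp.
move=> t'; rewrite in_cons => /orP [/eqP -> | ht']; first by exists l.
have [l' hl'] := IH t' ht'; exists l'; exact: (r_cvg_sub (u := f t' \o s)).
Qed.

Lemma bounded_mx_cvg_subseq p q (zs : nat -> 'M[R]_(p, q)) C :
  (forall k, mnorm (zs k) <= C) -> exists2 s, increasing s & exists z, mx_cvg (zs \o s) z.
Proof.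
move=> hC.
have hC' (t : 'I_p * 'I_q) k : `|zs k t.1 t.2| <= C.
  exact: le_trans (normr_entry_le _ _ _) (hC k).
have [s hs hl] := bounded_reals_cvg_subseq (enum {: 'I_p * 'I_q}) hC'.
have [lf hlf] := choice (fun t => hl t (mem_enum _ t)).
exists s => //; exists (\matrix_(i, j) lf (i, j)) => e e0.
have pq0 : 0 < (p * q)%:R + 1 :> R by rewrite ltr_wpDl ?ler0n.
pose e' := e / ((p * q)%:R + 1).
have e'0 : 0 < e' by rewrite divr_gt0.
have [Nf hNf] := choice (fun t => hlf t e' e'0).
exists (\max_(t : 'I_p * 'I_q) Nf t) => k hk /=.
apply: le_lt_trans (mnorm_le_entries (ltW e'0) _) _.
  move=> i j; rewrite !mxE; apply/ltW/(hNf (i, j)).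
  by apply: leq_trans hk; apply: (leq_bigmax_cond (i, j)).
by rewrite /e' mulrA ltr_pdivrMr // mulrDr mulr1 mulrC ltrDl.
Qed.

Lemma mx_cvg_cst p q (z : 'M[R]_(p, q)) : mx_cvg (fun=> z) z.
Proof. by move=> e e0; exists 0%N => k _; rewrite subrr mnorm0. Qed.

Lemma mx_cvg_mnorm_le p q (zs : nat -> 'M[R]_(p, q)) z C :
  (forall k, mnorm (zs k) <= C) -> mx_cvg zs z -> mnorm z <= C.
Proof.
move=> hb hz; apply/ler_addgt0Pr => e e0; have [N hN] := hz e e0.
by have := mnorm_le_add z (zs N); rewrite mnormB; have := hN N (leqnn N); have := hb N; lra.
Qed.

(* Otherwise points [w_j] of [A] violating [P (1/(j+1))] accumulate at some [z] of [A],
   against the local property at [z]. *)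
Lemma compact_uniform p q (A : set 'M[R]_(p, q)) C (P : R -> 'M[R]_(p, q) -> Prop) :
  (forall z, A z -> mnorm z <= C) ->
  (forall zs z, (forall k, A (zs k)) -> mx_cvg zs z -> A z) ->
  (forall z, A z -> exists2 e, 0 < e & exists2 r, 0 < r &
     forall w, mnorm (w - z) < r -> P e w) ->
  (forall e e' w, 0 < e' -> e' <= e -> P e w -> P e' w) ->
  exists2 e, 0 < e & forall w, A w -> P e w.
Proof.
move=> hb hcl hloc hmon; apply: contrapT => hn.
have hj (j : nat) : exists w, A w /\ ~ P j.+1%:R^-1 w.
  apply: contrapT => hj; apply: hn; exists j.+1%:R^-1; first by rewrite invr_gt0 ltr0Sn.
  by move=> w Aw; apply: contrapT => hP; apply: hj; exists w.
have [zs hzs] := choice hj.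
have [s hs [z hz]] := bounded_mx_cvg_subseq (fun k => hb _ (hzs k).1).
have [e e0 [r r0 hr]] := hloc z (hcl _ _ (fun k => (hzs (s k)).1) hz).
have [N1 hN1] := ltr_inv_nat e0; have [N2 hN2] := hz r r0.
pose k := maxn N1 N2.
apply: (hzs (s k)).2; apply: hmon (hr _ (hN2 k (leq_maxr _ _))).
  by rewrite invr_gt0 ltr0Sn.
apply: le_trans (ltW hN1); apply: ler_inv_nat.
exact: leq_trans (leq_maxl _ _) (increasing_ge hs k).
Qed.

Lemma uniform_over_ord (m : nat) (P : 'I_m -> R -> Prop) :
  (forall i, exists2 e, 0 < e & P i e) ->
  (forall i e e', 0 < e' -> e' <= e -> P i e -> P i e') ->
  exists2 e, 0 < e & forall i, P i e.
Proof.
move=> h hmon.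
have h' i : exists e, 0 < e /\ P i e by have [e ? ?] := h i; exists e.
have [f hf] := choice h'.
have f0 i : 0 < f i by case: (hf i).
have S0 : 0 <= \sum_i (f i)^-1 by apply: sumr_ge0 => i _; rewrite invr_ge0 ltW.
exists (1 + \sum_i (f i)^-1)^-1; first by rewrite invr_gt0; lra.
move=> i; apply: (hmon i (f i)); first by rewrite invr_gt0; lra.
  rewrite -[f i]invrK lef_pV2 ?posrE ?invr_gt0 //; last by lra.
  rewrite (bigD1 i) //=.
  have : 0 <= \sum_(j | j != i) (f j)^-1 by apply: sumr_ge0 => j _; rewrite invr_ge0 ltW.
  lra.
by case: (hf i).
Qed.

Lemma uniform_on_ball p q (F : set 'M[R]_(p, q)) r (P : R -> 'M[R]_(p, q) -> Prop) :
  (forall zs z, (forall k, F (zs k)) -> mx_cvg zs z -> F z) ->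
  (forall z, F z -> exists2 e, 0 < e & exists2 d, 0 < d &
     forall w, mnorm (w - z) < d -> P e w) ->
  (forall e e' w, 0 < e' -> e' <= e -> P e w -> P e' w) ->
  exists2 e, 0 < e & forall w, F w -> mnorm w <= r -> P e w.
Proof.
move=> hF hloc hmon.
have [|||e e0 he] := @compact_uniform _ _ [set z | F z /\ mnorm z <= r] r P _ _ _ hmon.
- by move=> z [].
- move=> zs z hzs hz; split; first by apply: hF hz => k; case: (hzs k).
  by apply: mx_cvg_mnorm_le hz => k; case: (hzs k).
- by move=> z [Fz _]; exact: hloc.
- by exists e => // w Fw wr; apply: he.
Qed.

Lemma uniform_on_ball_ord m p q r (P : 'I_m -> R -> 'M[R]_(p, q) -> Prop) :
  (forall i z, exists2 e, 0 < e & exists2 d, 0 < d & forall w, mnorm (w - z) < d -> P i e w) ->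
  (forall i e e' w, 0 < e' -> e' <= e -> P i e w -> P i e' w) ->
  exists2 e, 0 < e & forall i w, mnorm w <= r -> P i e w.
Proof.
move=> hloc hmon.
apply: (uniform_over_ord (P := fun i e => forall w, mnorm w <= r -> P i e w)).
  move=> i; have [e e0 he] := @uniform_on_ball _ _ setT r (P i) (fun _ _ _ _ => I)
    (fun z _ => hloc i z) (hmon i).
  by exists e => // w; apply: he.
by move=> i e e' e0 ee h z hz; exact: hmon e0 ee (h z hz).
Qed.

Definition bounded_seq p q (zs : nat -> 'M[R]_(p, q)) := exists C, forall k, mnorm (zs k) <= C.

Definition stable_subseq (P : (nat -> nat) -> Prop) :=
  forall s t, increasing t -> P s -> P (s \o t).

Lemma refine_cvg_subseq p q (zs : nat -> 'M[R]_(p, q)) P : bounded_seq zs ->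
  stable_subseq P /\ (exists2 s, increasing s & P s) ->
  stable_subseq (fun s => P s /\ exists z, mx_cvg (zs \o s) z) /\
  exists2 s, increasing s & P s /\ exists z, mx_cvg (zs \o s) z.
Proof.
move=> [C hC] [hP [s hs Ps]]; split => [s' t ht [Ps' [z hz]]|].
  by split; [exact: hP | exists z; exact: (mx_cvg_sub (u := zs \o s'))].
have [t ht [z hz]] := bounded_mx_cvg_subseq (fun k => hC (s k)).
by exists (s \o t); [exact: increasing_comp | split; [exact: hP | exists z]].
Qed.

Lemma stable_subseq_true : stable_subseq (fun=> True) /\ exists2 s, increasing s & True.
Proof. by split => //; exists id. Qed.

End Compactness.

Section Subgradients.
Variables (R : realType) (n : nat).
Implicit Types (f : 'cV[R]_n -> R) (x y z w : 'cV[R]_n).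

Definition lip_ball f w r c := forall y y', mnorm (y - w) < r -> mnorm (y' - w) < r ->
  `|f y - f y'| <= c * mnorm (y - y').

(* Concavity of [f - rho/2 ||.||^2] on the ball, written through the identity
   [||t y + (1-t) y'||^2 = t ||y||^2 + (1-t) ||y'||^2 - t (1-t) ||y - y'||^2]. *)
Definition uC2_ball f w r rho := forall y y' t,
  mnorm (y - w) < r -> mnorm (y' - w) < r -> 0 <= t <= 1 ->
  t * f y + (1 - t) * f y' <=
  f (t *: y + (1 - t) *: y') + rho / 2 * (t * (1 - t)) * mnorm (y - y') ^+ 2.

Lemma lip_ball_le f w r r' c c' : r' <= r -> c <= c' -> lip_ball f w r c -> lip_ball f w r' c'.
Proof.
move=> hr hc h y y' hy hy'.
apply: le_trans (h y y' (lt_le_trans hy hr) (lt_le_trans hy' hr)) _.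
by rewrite ler_wpM2r ?mnorm_ge0.
Qed.

Lemma uC2_ball_le f w r r' rho rho' : r' <= r -> rho <= rho' ->
  uC2_ball f w r rho -> uC2_ball f w r' rho'.
Proof.
move=> hr hrho h y y' t hy hy' ht; have /andP[t0 t1] := ht.
apply: le_trans (h y y' t (lt_le_trans hy hr) (lt_le_trans hy' hr) ht) _.
have q : 0 <= t * (1 - t) * mnorm (y - y') ^+ 2.
  by rewrite mulr_ge0 ?sqr_ge0 // mulr_ge0 // subr_ge0.
rewrite lerD2l -!mulrA; nra.
Qed.

Lemma upper_C2_ball f x : upper_C2 f x ->
  exists2 r, 0 < r & exists2 rho, 0 <= rho & uC2_ball f x r rho.
Proof.
move=> [r r0 [rho rho0 h]]; exists r => //; exists rho => // y y' t hy hy' ht.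
have := h y y' t hy hy' ht; rewrite /= sqr_mnorm_convex; lra.
Qed.

Lemma rsubdiff_mnorm_le f z u r c : 0 < r -> 0 <= c -> lip_ball f z r c ->
  rsubdiff f z u -> mnorm u <= c.
Proof.
move=> r0 c0 hL hs; have [->|u0] := eqVneq u 0; first by rewrite mnorm0.
have hu : 0 < mnorm u by rewrite mnorm_gt0.
apply/ler_addgt0Pr => e e0; have [d d0 hd] := hs e e0.
pose t := Num.min d r / 2.
have t0 : 0 < t by rewrite divr_gt0 // lt_min d0 r0.
have [td tr] : t < d /\ t < r by rewrite /t; split; [have := ge_min d d r|have := ge_min r d r];
  rewrite lexx ?orbT /= => h; lra.
pose y := z + (t / mnorm u) *: u.
have hy : mnorm (y - z) = t by rewrite /y addrC addKr mnorm_scale_unit // ltW.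
have := hd y; rewrite hy => /(_ td).
have -> : dot u (y - z) = t * mnorm u.
  by rewrite /y addrC addKr dotZr dot_sqr expr2; field; rewrite lt0r_neq0.
have := hL y z; rewrite hy subrr mnorm0 => /(_ tr r0); rewrite ler_norml => /andP[_ h2] h1.
by rewrite -(ler_pM2l t0); nra.
Qed.

Lemma lsubdiff_mnorm_le f x w r c : 0 < r -> 0 <= c -> lip_ball f x r c ->
  lsubdiff f x w -> mnorm w <= c.
Proof.
move=> r0 c0 hL [xs [ws [hx _ hr hw]]]; apply/ler_addgt0Pr => e e0.
have r2 : 0 < r / 2 by rewrite divr_gt0.
have [N1 hN1] := hx _ r2; have [N2 hN2] := hw _ e0.
pose k := maxn N1 N2; have hk1 := hN1 k (leq_maxl _ _); have hk2 := hN2 k (leq_maxr _ _).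
have : mnorm (ws k) <= c.
  apply: (rsubdiff_mnorm_le r2 c0 _ (hr k)) => y y' hy hy'.
  by apply: hL; apply: le_lt_trans (mnorm_tri _ (xs k) x) _; lra.
by have := mnorm_le_add w (ws k); rewrite mnormB; lra.
Qed.

Lemma uC2_ball_behind f x r rho y z sg : 0 < sg -> uC2_ball f x r rho ->
  mnorm (y - x) < r -> mnorm (z - sg *: (y - z) - x) < r ->
  sg * f y + f (z - sg *: (y - z)) <=
  (1 + sg) * f z + rho / 2 * sg * (1 + sg) * mnorm (y - z) ^+ 2.
Proof.
move=> sg0 hc hy hw; set d := y - z; set w := z - sg *: d; pose t := sg / (1 + sg).
have t01 : 0 <= t <= 1.
  by apply/andP; split; [rewrite divr_ge0 //; lra | rewrite ler_pdivrMr; lra].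
have := hc y w t hy hw t01.
have -> : t *: y + (1 - t) *: w = z by apply/matrixP => i j; rewrite /w /d /t !mxE; field; lra.
have -> : y - w = (1 + sg) *: d by apply/matrixP => i j; rewrite /w /d !mxE; ring.
rewrite mnormZ ger0_norm; last lra.
have -> : t * f y + (1 - t) * f w = (sg * f y + f w) / (1 + sg) by rewrite /t; field; lra.
have -> : rho / 2 * (t * (1 - t)) * ((1 + sg) * mnorm d) ^+ 2 = rho / 2 * sg * mnorm d ^+ 2.
  by rewrite /t; field; lra.
by rewrite ler_pdivrMr; [lra | lra].
Qed.

Lemma rsubdiff_upper_model f x r rho z u y : 0 <= rho -> uC2_ball f x r rho ->
  mnorm (z - x) < r / 2 -> mnorm (y - x) < r / 2 -> rsubdiff f z u ->
  f y <= f z + dot u (y - z) + rho / 2 * mnorm (y - z) ^+ 2.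
Proof.
move=> rho0 hc hz hy hs; set d := y - z; set D := mnorm d.
have D0 : 0 <= D := mnorm_ge0 d.
suff H eta : 0 < eta -> f y <= f z + dot u d + rho / 2 * D ^+ 2 + eta * D.
  apply/ler_addgt0Pr => e e0; apply: le_trans (H _ (divr_gt0 e0 (ltr_wpDl D0 ltr01))) _.
  by rewrite lerD2l mulrAC ler_pdivrMr; [nra|lra].
move=> eta0; have [dl dl0 hdl] := hs (eta / 2) ltac:(lra).
(* Approach [z] from behind: [z] lies on the chord from [w := z - sg d] to [y]. *)
pose mm := Num.min (Num.min dl (r / 2)) (eta / (rho + 1)).
have [m1 m2 m3] : [/\ mm <= dl, mm <= r / 2 & mm <= eta / (rho + 1)].
  by rewrite /mm !ge_min !lexx !orbT.
have r0 : 0 < r by have := mnorm_ge0 (z - x); lra.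
have m0 : 0 < mm by rewrite /mm !lt_min dl0 !divr_gt0 //; lra.
pose sg := mm / (2 * (D + 1)).
have sg0 : 0 < sg by rewrite divr_gt0 //; lra.
have hsD : sg * D <= mm / 2 by rewrite /sg mulrAC ler_pdivrMr; [nra|lra].
have hrho : rho * (sg * D) <= eta / 2.
  have : mm * (rho + 1) <= eta by rewrite -ler_pdivlMr //; lra.
  nra.
pose w := z - sg *: d.
have hwz : mnorm (w - z) = sg * D by rewrite /w addrC addKr mnormN mnormZ ger0_norm ?ltW.
have hv : f z - sg * dot u d - eta / 2 * (sg * D) <= f w.
  have := hdl w; rewrite hwz; have -> : w - z = - (sg *: d) by rewrite /w addrC addKr.
  by rewrite dotNr dotZr; apply; lra.
have hwx : mnorm (w - x) < r by apply: le_lt_trans (mnorm_tri w z x) _; lra.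
have hyx : mnorm (y - x) < r by lra.
have key := uC2_ball_behind sg0 hc hyx hwx; rewrite -/d -/D -/w in key.
have hq : rho * (sg * D) * (sg * D) <= eta / 2 * (sg * D).
  by apply: ler_wpM2r => //; rewrite mulr_ge0 // ltW.
have : 0 <= eta * (sg * D) by apply: mulr_ge0; [exact: ltW | apply: mulr_ge0 => //; exact: ltW].
move=> hpos; rewrite -(ler_pM2l sg0); lra.
Qed.

Lemma quadratic_model_perturb (xi b a d : 'cV[R]_n) rho eta :
  0 <= rho -> eta <= 1 -> mnorm a <= eta -> mnorm b <= eta ->
  dot (xi + b) (d - a) + rho / 2 * mnorm (d - a) ^+ 2 <=
  dot xi d + rho / 2 * mnorm d ^+ 2 +
  eta * (1 + mnorm d + mnorm xi + rho * mnorm d + rho).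
Proof.
move=> rho0 eta1 ha hb; rewrite sqr_mnormB dotDl !dotBr.
have A0 := mnorm_ge0 a; have B0 := mnorm_ge0 b; have D0 := mnorm_ge0 d.
have X0 := mnorm_ge0 xi.
have := normr_dot_le xi a; have := normr_dot_le b d; have := normr_dot_le b a.
have := normr_dot_le d a; rewrite !ler_norml => /andP[cda _] /andP[cba _] /andP[_ cbd] /andP[cxa _].
have i1 : mnorm xi * mnorm a <= mnorm xi * eta by apply: ler_wpM2l.
have i2 : mnorm b * mnorm d <= eta * mnorm d by apply: ler_wpM2r.
have i3 : mnorm b * mnorm a <= eta by nra.
have i4 : mnorm d * mnorm a <= mnorm d * eta by apply: ler_wpM2l.
have i5 : mnorm a ^+ 2 <= eta by rewrite expr2; nra.
have j1 : rho * (mnorm d * mnorm a) <= rho * (mnorm d * eta) by apply: ler_wpM2l.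
have j2 : rho * mnorm a ^+ 2 <= rho * eta by apply: ler_wpM2l.
have j3 : - (rho * dot d a) <= rho * (mnorm d * mnorm a).
  by rewrite -mulrN; apply: ler_wpM2l; rewrite // lerNl.
have : 0 <= rho * eta by rewrite mulr_ge0 // (le_trans A0).
lra.
Qed.

Lemma lsubdiff_upper_model f x r rho xi y : 0 <= rho -> uC2_ball f x r rho ->
  mnorm (y - x) < r / 2 -> lsubdiff f x xi ->
  f y <= f x + dot xi (y - x) + rho / 2 * mnorm (y - x) ^+ 2.
Proof.
move=> rho0 hc hy [xs [ws [hx hfx hr hw]]].
have r0 : 0 < r by have := mnorm_ge0 (y - x); lra.
set d := y - x; pose K := 1 + mnorm d + mnorm xi + rho * mnorm d + rho.
have K0 : 0 < K + 1.
  have := mulr_ge0 rho0 (mnorm_ge0 d); have := mnorm_ge0 d; have := mnorm_ge0 xi.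
  by rewrite /K; lra.
apply/ler_addgt0Pr => e e0.
pose eta := Num.min (Num.min 1 (r / 2)) (e / (K + 1)).
have [et1 et2 et3] : [/\ eta <= 1, eta <= r / 2 & eta <= e / (K + 1)].
  by rewrite /eta !ge_min !lexx !orbT.
have et0 : 0 < eta by rewrite /eta !lt_min ltr01 !divr_gt0.
have [N1 h1] := hx _ et0; have [N2 h2] := hfx _ et0; have [N3 h3] := hw _ et0.
pose k := maxn N1 (maxn N2 N3).
have [k1 k2 k3] : [/\ (N1 <= k)%N, (N2 <= k)%N & (N3 <= k)%N] by rewrite /k; split; lia.
have hk : mnorm (xs k - x) < r / 2 by have := h1 k k1; lra.
have := rsubdiff_upper_model rho0 hc hk hy (hr k).
have -> : y - xs k = d - (xs k - x) by rewrite /d opprB addrA subrK.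
have -> : ws k = xi + (ws k - xi) by rewrite addrC subrK.
have := quadratic_model_perturb xi d rho0 et1 (ltW (h1 k k1)) (ltW (h3 k k3)).
have := h2 k k2; rewrite /= ltr_norml => /andP[_ hf].
have : eta * K <= e - eta by move: et3; rewrite ler_pdivlMr //; lra.
rewrite -/K; lra.
Qed.

Lemma upper_model_extend f x xi y s rho B X Ry : 0 < s -> 0 <= rho ->
  (mnorm (y - x) < s -> f y <= f x + dot xi (y - x) + rho / 2 * mnorm (y - x) ^+ 2) ->
  `|f y| <= B -> `|f x| <= B -> mnorm xi <= X -> mnorm (y - x) <= Ry ->
  f y <= f x + dot xi (y - x) + (rho / 2 + (2 * B + X * Ry) / s ^+ 2) * mnorm (y - x) ^+ 2.
Proof.
move=> s0 rho0 hloc hy hx hX hR; set D := mnorm (y - x).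
have D0 : 0 <= D := mnorm_ge0 _.
have B0 : 0 <= B by apply: le_trans (normr_ge0 _) hy.
have X0 : 0 <= X by apply: le_trans (mnorm_ge0 _) hX.
have C0 : 0 <= 2 * B + X * Ry by have := mulr_ge0 X0 (le_trans D0 hR); lra.
have q : 0 <= (2 * B + X * Ry) / s ^+ 2 * D ^+ 2.
  by apply: mulr_ge0; [apply: divr_ge0; rewrite ?sqr_ge0 | exact: sqr_ge0].
have q' : 0 <= rho / 2 * D ^+ 2 by apply: mulr_ge0; [apply: divr_ge0 | exact: sqr_ge0].
have [hD|hD] := ltrP D s; first by have := hloc hD; rewrite -/D; lra.
have : 2 * B + X * Ry <= (2 * B + X * Ry) / s ^+ 2 * D ^+ 2.
  rewrite mulrAC ler_pdivlMr ?exprn_gt0 //; apply: ler_wpM2l => //.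
  nra.
have : dot xi (y - x) >= - (X * Ry).
  have := normr_dot_le xi (y - x); rewrite ler_norml -/D => /andP[h _].
  by apply: le_trans h; rewrite lerN2 ler_pM ?mnorm_ge0.
move: hy hx; rewrite !ler_norml => /andP[_ hy] /andP[hx _]; lra.
Qed.

Lemma inv_le_inv (e e' : R) : 0 < e' -> e' <= e -> e^-1 <= e'^-1.
Proof. by move=> e0 ee; rewrite lef_pV2 ?posrE // (lt_le_trans e0 ee). Qed.

Lemma small_inv_ge (d c : R) : 0 < d -> exists2 e, 0 < e & e <= d /\ c <= e^-1.
Proof.
move=> d0; have c1 : 0 < `|c| + 1 by have := normr_ge0 c; lra.
pose e := Num.min d (`|c| + 1)^-1; have e0 : 0 < e by rewrite lt_min d0 invr_gt0.
exists e => //; split; first by rewrite ge_min lexx.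
have : e <= (`|c| + 1)^-1 by rewrite ge_min lexx orbT.
rewrite -lef_pV2 ?posrE ?invr_gt0 // invrK; have := ler_norm c; lra.
Qed.

Lemma loc_lipschitz_near f z : loc_lipschitz f z ->
  exists2 e, 0 < e & exists2 r, 0 < r &
    forall w, mnorm (w - z) < r -> lip_ball f w e e^-1.
Proof.
move=> [d d0 [c hc]]; have d2 : 0 < d / 2 by rewrite divr_gt0.
have [e e0 [ed ce]] := small_inv_ge c d2.
exists e => //; exists (d / 2) => // w hw.
apply: (lip_ball_le (r := d / 2) ed ce) => y y' hy hy'.
by apply: hc; apply: le_lt_trans (mnorm_tri _ w z) _; lra.
Qed.

Lemma upper_C2_near f z : upper_C2 f z ->
  exists2 e, 0 < e & exists2 r, 0 < r &
    forall w, mnorm (w - z) < r -> uC2_ball f w e e^-1.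
Proof.
move=> /upper_C2_ball [d d0 [rho rho0 hc]].
have d2 : 0 < d / 2 by rewrite divr_gt0.
have [e e0 [ed ce]] := small_inv_ge rho d2.
exists e => //; exists (d / 2) => // w hw.
apply: (uC2_ball_le (r := d / 2) ed ce) => y y' t hy hy'.
by apply: hc; apply: le_lt_trans (mnorm_tri _ w z) _; lra.
Qed.

Lemma loc_lipschitz_bounded_near f z : loc_lipschitz f z ->
  exists2 e, 0 < e & exists2 r, 0 < r & forall w, mnorm (w - z) < r -> `|f w| <= e^-1.
Proof.
move=> [d d0 [c hc]].
have [e e0 [_ ce]] := small_inv_ge (`|f z| + `|c| * d) d0.
exists e => //; exists d => // w hw; apply: le_trans ce.
have := hc w z hw; rewrite subrr mnorm0 => /(_ d0) h.
have : `|c| * mnorm (w - z) <= `|c| * d by apply: ler_wpM2l; [exact: normr_ge0 | exact: ltW].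
have : c * mnorm (w - z) <= `|c| * mnorm (w - z).
  by apply: ler_wpM2r; [exact: mnorm_ge0 | exact: ler_norm].
have := ler_normD (f z) (f w - f z); rewrite addrC subrK addrC; lra.
Qed.

Lemma loc_lipschitz_cvg f z zs : loc_lipschitz f z -> mx_cvg zs z ->
  r_cvg (f \o zs) (f z).
Proof.
move=> /loc_lipschitz_near [e e0 [r r0 /(_ z)]]; rewrite subrr mnorm0 => /(_ r0) hL hz.
move=> eps eps0; have m0 : 0 < Num.min e (eps * e) by rewrite lt_min e0 mulr_gt0.
have [N hN] := hz _ m0.
exists N => k /hN; rewrite lt_min => /andP[h1 h2] /=.
apply: le_lt_trans (hL _ _ h1 (_ : mnorm (z - z) < e)) _; first by rewrite subrr mnorm0.
by rewrite mulrC ltr_pdivrMr.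
Qed.

Lemma upper_model_uniform f x xi y e B X r : 0 < e -> uC2_ball f x e e^-1 ->
  lsubdiff f x xi -> `|f y| <= B -> `|f x| <= B -> mnorm xi <= X -> mnorm (y - x) <= r ->
  f y <= f x + dot xi (y - x) + (e^-1 / 2 + (2 * B + X * r) / (e / 2) ^+ 2) * mnorm (y - x) ^+ 2.
Proof.
move=> e0 hc hxi hy hx hX hr; have e'0 : 0 <= e^-1 by rewrite invr_ge0 ltW.
apply: upper_model_extend hy hx hX hr => //; first by rewrite divr_gt0.
by move=> hye; apply: lsubdiff_upper_model hc hye hxi.
Qed.

End Subgradients.

Section ConvexAnalysis.
Variables (R : realType) (n : nat).
Implicit Types (p phi : 'cV[R]_n -> R) (c d u v x : 'cV[R]_n).

Definition vanish_from k d := forall i : 'I_n, (k <= i)%N -> d i 0 = 0.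

Lemma vanish_from0 d : vanish_from 0 d -> d = 0.
Proof. by move=> hd; apply/matrixP => i j; rewrite (ord1 j) mxE hd. Qed.

Lemma vanish_fromn d : vanish_from n d.
Proof. by move=> i hi; move: (ltn_ord i); rewrite ltnNge hi. Qed.

Lemma vanish_from_split k (hk : (k < n)%N) d : vanish_from k.+1 d ->
  vanish_from k (d - d (Ordinal hk) 0 *: delta_mx (Ordinal hk) 0).
Proof.
move=> hd i hi; rewrite !mxE; have [->|hne] := eqVneq i (Ordinal hk).
  by rewrite eqxx mulr1 subrr.
rewrite mulr0 subr0 hd // ltn_neqAle hi andbT; apply/eqP => hki.
by move/eqP: hne; apply; apply: val_inj; rewrite /= hki.
Qed.

Lemma subgradient_extension_gap p k c u v e s t :
  convex_fun p -> (forall d, vanish_from k d -> dot c d <= p d) ->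
  vanish_from k u -> vanish_from k v -> 0 < s -> 0 < t ->
  t * dot c u + s * dot c v <= t * p (u - s *: e) + s * p (v + t *: e).
Proof.
move=> hcv hc hu hv s0 t0; have st : 0 < s + t by lra.
pose lm := t / (s + t); pose w := (s + t)^-1 *: (t *: u + s *: v).
have lm01 : 0 <= lm <= 1.
  by apply/andP; split; [rewrite divr_ge0 //; lra | rewrite ler_pdivrMr //; lra].
have := hcv (u - s *: e) (v + t *: e) lm lm01.
have -> : lm *: (u - s *: e) + (1 - lm) *: (v + t *: e) = w.
  by apply/matrixP => i j; rewrite !mxE /lm; field; rewrite lt0r_neq0.
have : dot c w <= p w by apply: hc => i hi; rewrite !mxE hu // hv // !mulr0 addr0 mulr0.
rewrite /w dotZr dotDr !dotZr => h1 h2.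
have st' : 0 < (s + t)^-1 by rewrite invr_gt0.
rewrite -(ler_pM2l st').
have -> : (s + t)^-1 * (t * p (u - s *: e) + s * p (v + t *: e)) =
          lm * p (u - s *: e) + (1 - lm) * p (v + t *: e).
  by rewrite /lm; field; rewrite lt0r_neq0.
exact: le_trans h1 h2.
Qed.

(* One step of the finite-dimensional Hahn-Banach argument: extend the linear
   minorant [c] from the coordinate subspace [{d | d_i = 0 for i >= k}] to the
   next one, choosing the new slope as a supremum of difference quotients. *)
Lemma subgradient_extend k (hk : (k < n)%N) p c : convex_fun p ->
  (forall d, vanish_from k d -> dot c d <= p d) ->
  exists c', forall d, vanish_from k.+1 d -> dot c' d <= p d.
Proof.
move=> hcv hc; pose ik := Ordinal hk; pose e : 'cV[R]_n := delta_mx ik 0.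
have gap := subgradient_extension_gap e hcv hc.
pose Lo := [set r | exists u s, [/\ vanish_from k u, 0 < s & r = (dot c u - p (u - s *: e)) / s]].
have v0 : vanish_from k 0 by move=> i _; rewrite mxE.
have hs : has_sup Lo.
  split; first by exists ((dot c 0 - p (0 - 1 *: e)) / 1); exists 0, 1.
  exists (p (0 + 1 *: e) - dot c 0) => r [u [s [hu s0 ->]]].
  have := gap u 0 s 1 hu v0 s0 ltr01; rewrite mul1r ler_pdivrMr //; lra.
pose gm := sup Lo; exists (c + (gm - c ik 0) *: e) => d hd.
pose t := d ik 0; pose u := d - t *: e; have hu : vanish_from k u := vanish_from_split hk hd.
have ed : d = u + t *: e by rewrite /u subrK.
have -> : dot (c + (gm - c ik 0) *: e) d = dot c u + t * gm.
  rewrite dotDl dotZl /u dotBr !dotZr [dot e d]dotC !dot_delta -/t; ring.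
have [t0|tn0] := eqVneq t 0; first by rewrite t0 mul0r addr0 ed t0 scale0r addr0 hc.
have [tp|tn] := ltrP 0 t.
  have : gm <= (p (u + t *: e) - dot c u) / t.
    apply: ge_sup; first by case: hs.
    move=> r [v [s [hv s0 ->]]]; have := gap v u s t hv hu s0 tp.
    by rewrite ler_pdivrMr // mulrAC ler_pdivlMr //; nra.
  by rewrite ler_pdivlMr // -ed; lra.
have : (dot c u - p (u - (- t) *: e)) / (- t) <= gm.
  by apply: sup_upper_bound => //; exists u, (- t); split => //; rewrite oppr_gt0 lt_neqAle tn0.
by rewrite ler_pdivrMr ?oppr_gt0 ?lt_neqAle ?tn0 // scaleNr opprK -ed; lra.
Qed.

Lemma convex_subgradient0 p : convex_fun p -> p 0 = 0 ->
  exists l, forall d, dot l d <= p d.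
Proof.
move=> hcv p0.
suff /(_ n (leqnn n)) [l hl] : forall k, (k <= n)%N ->
    exists l, forall d, vanish_from k d -> dot l d <= p d.
  by exists l => d; apply/hl/vanish_fromn.
elim=> [|k IH] hk; first by exists 0 => d /vanish_from0 ->; rewrite dot0l p0.
have [c hc] := IH (ltnW hk); exact: subgradient_extend hcv hc.
Qed.

(* The sum rule [0 in d(a + i_K)(0) -> 0 in da(0) + N_K(0)], through the
   infimal convolution [d |-> inf_{e in K} a (d + e)], a finite convex minorant of [a]. *)
Lemma subgradient_sum_rule (a : 'cV[R]_n -> R) (K : set 'cV[R]_n) :
  convex_fun a -> a 0 = 0 -> convex_set K -> K 0 -> (forall e, K e -> 0 <= a e) ->
  exists l, (forall d, dot l d <= a d) /\ (forall e, K e -> 0 <= dot l e).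
Proof.
move=> ha a0 hK K0 hpos.
pose S d := [set r | exists2 e, K e & r = a (d + e)]; pose p d := inf (S d).
have Sne d : S d !=set0 by exists (a (d + 0)); exists 0.
have Slb d : has_lbound (S d).
  exists (- a (- d)) => r [e Ke ->].
  have h2 : 0 <= (2^-1 : R) <= 1 by apply/andP; split; lra.
  have := hK e 0 _ Ke K0 h2; rewrite scaler0 addr0 => /hpos.
  have := ha (d + e) (- d) _ h2.
  have -> : 2^-1 *: (d + e) + (1 - 2^-1) *: - d = 2^-1 *: e.
    by apply/matrixP => i j; rewrite !mxE; field.
  lra.
have ple d e : K e -> p d <= a (d + e) by move=> Ke; apply: ge_inf (Slb d) _ _; exists e.
have pcv : convex_fun p.
  move=> y z t ht; have /andP[t0 t1] := ht; apply/ler_addgt0Pr => eps e0.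
  have e2 : 0 < eps / 2 by rewrite divr_gt0.
  have [_ [e1 Ke1 ->] h1] := inf_adherent e2 (conj (Sne y) (Slb y)).
  have [_ [e2' Ke2 ->] h2] := inf_adherent e2 (conj (Sne z) (Slb z)).
  apply: le_trans (ple _ _ (hK e1 e2' t Ke1 Ke2 ht)) _.
  have -> : t *: y + (1 - t) *: z + (t *: e1 + (1 - t) *: e2') =
            t *: (y + e1) + (1 - t) *: (z + e2') by rewrite !scalerDr addrACA.
  apply: le_trans (ha _ _ _ ht) _.
  have q1 : t * a (y + e1) <= t * (p y + eps / 2) by apply: ler_wpM2l; rewrite // ltW.
  have q2 : (1 - t) * a (z + e2') <= (1 - t) * (p z + eps / 2).
    by apply: ler_wpM2l; rewrite ?subr_ge0 // ltW.
  nra.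
have p0 : p 0 = 0.
  apply/eqP; rewrite eq_le; apply/andP; split; first by have := ple 0 0 K0; rewrite addr0 a0.
  by apply: lb_le_inf => // r [e Ke ->]; rewrite add0r hpos.
have [l hl] := convex_subgradient0 pcv p0; exists l; split.
  by move=> d; apply: le_trans (hl d) _; have := ple d 0 K0; rewrite addr0.
by move=> e Ke; have := le_trans (hl (- e)) (ple _ _ Ke); rewrite addNr a0 dotNr oppr_le0.
Qed.

Lemma convex_segment_ub p (e : 'cV[R]_n) B s : convex_fun p -> 0 < B -> `|s| <= B ->
  p (s *: e) <= `|p (B *: e)| + `|p ((- B) *: e)|.
Proof.
move=> hcv B0; rewrite ler_norml => /andP [hs1 hs2].
pose t := (s + B) / (2 * B).
have t01 : 0 <= t <= 1.
  by apply/andP; split; [rewrite divr_ge0; lra | rewrite ler_pdivrMr; lra].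
have := hcv (B *: e) ((- B) *: e) t t01.
have -> : t *: (B *: e) + (1 - t) *: ((- B) *: e) = s *: e.
  by apply/matrixP => i j; rewrite !mxE /t; field; lra.
move=> h; apply: le_trans h _; have /andP [t0 t1] := t01.
have : t * p (B *: e) <= t * `|p (B *: e)| by apply: ler_wpM2l => //; apply: ler_norm.
have : (1 - t) * p ((- B) *: e) <= (1 - t) * `|p ((- B) *: e)|.
  by apply: ler_wpM2l; [lra | apply: ler_norm].
have := normr_ge0 (p (B *: e)); have := normr_ge0 (p ((- B) *: e)); nra.
Qed.

Lemma convex_box_ub p : convex_fun p -> forall k, (k <= n)%N -> forall C, 0 <= C ->
  exists M, forall z, vanish_from k z -> (forall i, `|z i 0| <= C) -> p z <= M.
Proof.
move=> hcv; elim=> [|k IH] hk C C0; first by exists (p 0) => z /vanish_from0 ->.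
have [M1 hM1] := IH (ltnW hk) (2 * (C + 1)) ltac:(lra).
pose e : 'cV[R]_n := delta_mx (Ordinal hk) 0; pose B := 2 * (C + 1).
exists (2^-1 * M1 + 2^-1 * (`|p (B *: e)| + `|p ((- B) *: e)|)) => z hz hC.
pose t := z (Ordinal hk) 0; pose u := z - t *: e.
have hu : vanish_from k u := vanish_from_split hk hz.
have h2 : 0 <= (2^-1 : R) <= 1 by apply/andP; split; lra.
have := hcv (2 *: u) ((2 * t) *: e) 2^-1 h2.
have -> : 2^-1 *: (2 *: u) + (1 - 2^-1) *: ((2 * t) *: e) = z.
  by apply/matrixP => i j; rewrite /u !mxE; field.
move=> h; apply: le_trans h _.
have q1 : p (2 *: u) <= M1.
  apply: hM1 => [i hi|i]; first by rewrite mxE hu // mulr0.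
  rewrite mxE normrM ger0_norm //; suff : `|u i 0| <= C + 1 by lra.
  rewrite /u /e !mxE; have [->|hne] := eqVneq i (Ordinal hk).
    by rewrite eqxx mulr1 subrr normr0; lra.
  by rewrite mulr0 subr0; have := hC i; lra.
have q2 : p ((2 * t) *: e) <= `|p (B *: e)| + `|p ((- B) *: e)|.
  apply: convex_segment_ub => //; first by rewrite /B; lra.
  by rewrite normrM ger0_norm //; have := hC (Ordinal hk); rewrite /B; lra.
lra.
Qed.

Lemma convex_bounded p : convex_fun p -> forall C,
  exists2 M, 0 <= M & forall z, mnorm z <= C -> `|p z| <= M.
Proof.
move=> hcv C; pose C' := Num.max C 0.
have [C'0 CC'] : 0 <= C' /\ C <= C' by rewrite /C' !le_max !lexx orbT.
have [M hM] := convex_box_ub hcv (leqnn n) C'0.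
have hub z : mnorm z <= C -> p z <= M.
  move=> hz; apply: hM => [|i]; first exact: vanish_fromn.
  by apply: le_trans (normr_entry_le _ _ _) _; lra.
exists (`|M| + 2 * `|p 0|); first by have := normr_ge0 M; have := normr_ge0 (p 0); lra.
move=> z hz; rewrite ler_norml; apply/andP; split; last first.
  by have := hub z hz; have := ler_norm M; have := normr_ge0 (p 0); lra.
have h2 : 0 <= (2^-1 : R) <= 1 by apply/andP; split; lra.
have := hcv z (- z) 2^-1 h2.
have -> : 2^-1 *: z + (1 - 2^-1) *: - z = 0 by apply/matrixP => i j; rewrite !mxE; field.
have := hub (- z); rewrite mnormN => /(_ hz).
have := ler_norm M; have := ler_norm (p 0); have := ler_norm (- p 0); rewrite normrN; lra.
Qed.

Lemma convex_subgradient_mnorm_le phi x w M :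
  (forall z, mnorm z <= mnorm x + 1 -> `|phi z| <= M) ->
  (forall d, dot w d <= phi (x + d) - phi x) -> mnorm w <= 2 * M.
Proof.
move=> hM hw; have M0 : 0 <= M by apply: le_trans (hM x _); rewrite ?normr_ge0 //; lra.
have [->|w0] := eqVneq w 0; first by rewrite mnorm0; lra.
have hu : 0 < mnorm w by rewrite mnorm_gt0.
have := hw ((1 / mnorm w) *: w); rewrite dotZr dot_sqr.
have h1 : mnorm (x + (1 / mnorm w) *: w) <= mnorm x + 1.
  by apply: le_trans (mnormD _ _) _; rewrite mnorm_scale_unit //; lra.
have := hM _ h1; have := hM x ltac:(lra).
rewrite !ler_norml => /andP [a1 _] /andP [_ a2].
have -> : 1 / mnorm w * mnorm w ^+ 2 = mnorm w by rewrite expr2 mulrA mul1r mulVf ?mul1r ?lt0r_neq0.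
lra.
Qed.

(* Convexity gives [phi (x + d) - phi x >= ||d|| (phi u - phi x) >= - 2 M ||d||] for the
   point [u] in direction [d] on the unit sphere around [x], so the quadratic term wins. *)
Lemma convex_descent_step_le phi x d (xi : 'cV[R]_n) mu M : convex_fun phi -> 0 < mu ->
  (forall z, mnorm z <= mnorm x + 1 -> `|phi z| <= M) ->
  dot xi d + mu / 2 * mnorm d ^+ 2 + phi (x + d) - phi x <= 0 ->
  mnorm d <= 1 + 2 * (mnorm xi + 2 * M) / mu.
Proof.
move=> hcv mu0 hM h; have M0 : 0 <= M by apply: le_trans (hM x _); rewrite ?normr_ge0 //; lra.
set r := mnorm d; have r0 : 0 <= r := mnorm_ge0 _.
have q0 : 0 <= 2 * (mnorm xi + 2 * M) / mu by rewrite divr_ge0 //; have := mnorm_ge0 xi; lra.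
have [r1|r1] := lerP r 1; first lra.
pose u := x + (1 / r) *: d.
have dn0 : d != 0 by rewrite -mnorm_gt0 -/r; lra.
have hur : mnorm (u - x) = 1 by rewrite /u addrC addKr mnorm_scale_unit //; lra.
have hu : mnorm u <= mnorm x + 1 by have := mnorm_le_add u x; lra.
have t01 : 0 <= 1 / r <= 1 by apply/andP; split; [rewrite divr_ge0; lra| rewrite ler_pdivrMr; lra].
have := hcv (x + d) x (1 / r) t01.
have -> : (1 / r) *: (x + d) + (1 - 1 / r) *: x = u by apply/matrixP => i j; rewrite /u !mxE; ring.
move=> hc.
have hphi : r * (phi u - phi x) <= phi (x + d) - phi x.
  have : r * phi u <= r * (1 / r * phi (x + d) + (1 - 1 / r) * phi x) by rewrite ler_pM2l; lra.
  have -> : r * (1 / r * phi (x + d) + (1 - 1 / r) * phi x) = phi (x + d) + (r - 1) * phi x.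
    by field; lra.
  lra.
move: (hM u hu) (hM x ltac:(lra)); rewrite !ler_norml => /andP [a1 _] /andP [_ a2].
have hd : - (mnorm xi * r) <= dot xi d by have := normr_dot_le xi d; rewrite ler_norml => /andP[].
have h5 : r * (- 2 * M) <= r * (phi u - phi x) by apply: ler_wpM2l => //; lra.
have : r * (mu / 2 * r - mnorm xi - 2 * M) <= 0.
  have -> : r * (mu / 2 * r - mnorm xi - 2 * M) = mu / 2 * r ^+ 2 - mnorm xi * r + r * (- 2 * M).
    by ring.
  rewrite -/r in h; lra.
rewrite pmulr_rle0; last lra.
move=> h3; have : r <= 2 * (mnorm xi + 2 * M) / mu by rewrite ler_pdivlMr //; lra.
lra.
Qed.

Lemma lsubdiff_of_convex phi x w : (forall d, dot w d <= phi (x + d) - phi x) ->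
  lsubdiff phi x w.
Proof.
move=> hw; exists (fun=> x), (fun=> w); split; try exact: mx_cvg_cst.
- by move=> e e0; exists 0%N => k _; rewrite /= subrr normr0.
- move=> k e e0; exists 1 => // z _; have := hw (z - x); rewrite (addrC x) subrK.
  by have := mulr_ge0 (ltW e0) (mnorm_ge0 (z - x)); lra.
Qed.

Lemma ncone_of_convex (C : set 'cV[R]_n) x y : C x ->
  (forall z, C z -> dot y (z - x) <= 0) -> ncone C x y.
Proof.
move=> hC hy; split => //; exists (fun=> x), (fun=> y); split => //; try exact: mx_cvg_cst.
move=> k; split => // e e0; exists 1 => // z hz _.
by have := hy z hz; have := mulr_ge0 (ltW e0) (mnorm_ge0 (z - x)); lra.
Qed.

End ConvexAnalysis.

Section ModelProblem.
Variables (R : realType) (n m : nat) (g : 'I_m -> 'cV[R]_n -> R).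
Implicit Types (phi : 'cV[R]_n -> R) (s z d xi : 'cV[R]_n) (Q : 'M[R]_n).

Lemma Gfun_entry z s (W : 'M[R]_(n, m)) (Lv : 'cV[R]_m) i :
  Gfun g z s W Lv i 0 = g i s + dot (col i W) (z - s) + 2^-1 * mnorm (z - s) ^+ 2 * Lv i 0.
Proof. by rewrite /Gfun !mxE; congr (_ + _ + _); apply: eq_bigr => a _; rewrite !mxE. Qed.

Lemma entry_le_infnorm_pospart p (a : 'cV[R]_p) i : a i 0 <= infnorm (pospart a).
Proof.
apply: le_trans (_ : `|pospart a i 0| <= _); last exact: le_bigmax.
by rewrite mxE; apply: le_trans (ler_norm _); rewrite le_max lexx.
Qed.

Lemma Sset_center s (W : 'M[R]_(n, m)) (Lv : 'cV[R]_m) : nonpos (gvec g s) -> Sset g s W Lv s.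
Proof.
move=> hs i; rewrite Gfun_entry subrr dot0r mnorm0 expr0n /= mulr0 mul0r !addr0.
by have := hs i; rewrite mxE.
Qed.

Lemma Sset_convex s (W : 'M[R]_(n, m)) (Lv : 'cV[R]_m) : (forall i, 0 <= Lv i 0) ->
  convex_set (Sset g s W Lv).
Proof.
move=> hL z1 z2 t h1 h2 ht i; have /andP [t0 t1] := ht.
have e1 := h1 i; have e2 := h2 i; rewrite !Gfun_entry in e1 e2 *.
have -> : t *: z1 + (1 - t) *: z2 - s = t *: (z1 - s) + (1 - t) *: (z2 - s).
  by apply/matrixP => a b; rewrite !mxE; ring.
rewrite dotDr !dotZr sqr_mnorm_convex.
have q : 0 <= 2^-1 * (t * (1 - t) * mnorm (z1 - s - (z2 - s)) ^+ 2) * Lv i 0.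
  have tt : 0 <= t * (1 - t) by nra.
  by apply: mulr_ge0 (hL i); apply: mulr_ge0; [lra | exact: mulr_ge0 tt (sqr_ge0 _)].
set c1 := dot _ (z1 - s) in e1 *; set c2 := dot _ (z2 - s) in e2 *.
set A := mnorm (z1 - s) ^+ 2 in e1 *; set B := mnorm (z2 - s) ^+ 2 in e2 *.
have f1 : t * (g i s + c1 + 2^-1 * A * Lv i 0) <= 0 by rewrite mulr_ge0_le0.
have f2 : (1 - t) * (g i s + c2 + 2^-1 * B * Lv i 0) <= 0 by rewrite mulr_ge0_le0 ?subr_ge0.
lra.
Qed.

Lemma Fkj_sub_center c0 s xi Q phi z :
  Fkj c0 s xi Q phi z - Fkj c0 s xi Q phi s =
  dot xi (z - s) + 2^-1 * dot (z - s) (Q *m (z - s)) + phi z - phi s.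
Proof. by rewrite /Fkj subrr dot0r dot0l; ring. Qed.

Lemma Fkj_shift c0 s xi Q phi z d : Q^T = Q ->
  Fkj c0 s xi Q phi (z + d) - Fkj c0 s xi Q phi z =
  dot (xi + Q *m (z - s)) d + 2^-1 * dot d (Q *m d) + phi (z + d) - phi z.
Proof.
move=> hQ; rewrite /Fkj; set a := z - s.
have -> : z + d - s = a + d by rewrite /a addrAC.
clearbody a; rewrite mulmxDr !dotDl !dotDr [dot a (Q *m d)]dot_mulmx hQ [dot d (Q *m a)]dotC.
by field.
Qed.

Lemma ge0_of_perturb (a b : R) : (forall t, 0 < t <= 1 -> 0 <= a + t * b) -> 0 <= a.
Proof.
move=> h; rewrite -[a]opprK oppr_ge0; apply/ler_addgt0Pr => e e0; rewrite add0r.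
have b1 : 0 < `|b| + 1 by have := normr_ge0 b; lra.
pose t := Num.min 1 (e / (`|b| + 1)).
have [t1 t2] : t <= 1 /\ t <= e / (`|b| + 1) by rewrite /t !ge_min !lexx orbT.
have t0 : 0 < t by rewrite lt_min ltr01 divr_gt0.
have := h t; rewrite t0 t1 => /(_ isT).
have : t * b <= e.
  apply: le_trans (_ : t * (`|b| + 1) <= e); last by rewrite -ler_pdivlMr.
  by rewrite ler_pM2l //; have := ler_norm b; lra.
lra.
Qed.

(* Minimality along the segments [xb + t e], [t -> 0], makes the convex function
   [a e := phi (xb + e) - phi xb + <xi + Q (xb - s), e>] nonnegative on [S - xb];
   the sum rule then splits [0 in d(a + i_(S - xb))(0)]. *)
Lemma Fkj_argmin_normal c0 s xi Q phi (S : set 'cV[R]_n) xb :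
  convex_fun phi -> convex_set S -> Q^T = Q -> S xb ->
  (forall z, S z -> Fkj c0 s xi Q phi xb <= Fkj c0 s xi Q phi z) ->
  exists w, (forall d, dot w d <= phi (xb + d) - phi xb) /\
    forall z, S z -> dot (- (xi + Q *m (xb - s) + w)) (z - xb) <= 0.
Proof.
move=> hcv hS hQ Sxb hmin; set gv := xi + Q *m (xb - s).
pose a d := phi (xb + d) - phi xb + dot gv d; pose K := [set e | S (xb + e)].
have comb (t : R) d1 d2 : xb + (t *: d1 + (1 - t) *: d2) = t *: (xb + d1) + (1 - t) *: (xb + d2).
  by apply/matrixP => i j; rewrite !mxE; ring.
have acv : convex_fun a.
  move=> d1 d2 t ht; rewrite /a comb; have := hcv (xb + d1) (xb + d2) t ht.
  rewrite dotDr !dotZr; lra.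
have Kcv : convex_set K by move=> e1 e2 t h1 h2 ht; rewrite /K /= comb; exact: hS.
have K0 : K 0 by rewrite /K /= addr0.
have Kpos e : K e -> 0 <= a e.
  move=> Ke; apply: (@ge0_of_perturb _ (dot e (Q *m e) / 2)) => t /andP[t0 t1].
  have t01 : 0 <= t <= 1 by rewrite t1 ltW.
  have hte : xb + t *: e = t *: (xb + e) + (1 - t) *: xb.
    by apply/matrixP => i j; rewrite !mxE; ring.
  have h1 : 0 <= t * dot gv e + 2^-1 * (t * (t * dot e (Q *m e))) + phi (xb + t *: e) - phi xb.
    have := hmin (xb + t *: e); rewrite hte => /(_ (hS (xb + e) xb t Ke Sxb t01)).
    by rewrite -hte -subr_ge0 Fkj_shift // dotZr dotZl -scalemxAr dotZr.
  have h2 := hcv (xb + e) xb t t01; rewrite -hte in h2.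
  by rewrite -(pmulr_rge0 _ t0) /a; lra.
have a0 : a 0 = 0 by rewrite /a addr0 subrr dot0r addr0.
have [l [hl1 hl2]] := subgradient_sum_rule acv a0 Kcv K0 Kpos.
exists (l - gv); split => [d|z hz]; first by rewrite dotBl; have := hl1 d; rewrite /a; lra.
by rewrite addrC subrK dotNl oppr_le0 hl2 // /K /= addrC subrK.
Qed.

End ModelProblem.

Section BoundedMultipliers.
Variables (R : realType) (n m : nat) (g : 'I_m -> 'cV[R]_n -> R) (phi : 'cV[R]_n -> R).
Variables (sx sxi sxb : nat -> 'cV[R]_n) (sL : nat -> 'cV[R]_m) (sV : nat -> 'M[R]_(n, m))
  (sQ : nat -> 'M[R]_n).

Local Notation Sk k := (Sset g (sx k) (sV k) (sL k)).

Definition data_close (s0 xi0 x0 : 'cV[R]_n) (L0 : 'cV[R]_m) (V0 : 'M[R]_(n, m))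
  (Q0 : 'M[R]_n) e k :=
  mnorm (sx k - s0) < e /\ mnorm (sL k - L0) < e /\ mnorm (sV k - V0) < e /\
  mnorm (sxi k - xi0) < e /\ mnorm (sQ k - Q0) < e /\ mnorm (sxb k - x0) < e.

Lemma bounded_data_subseq_cvg (kf : nat -> nat) :
  bounded_seq sx -> bounded_seq sL -> bounded_seq sV -> bounded_seq sxi ->
  bounded_seq sQ -> bounded_seq sxb ->
  exists s0 xi0 x0 L0 V0 Q0, exists2 s, increasing s & forall e, 0 < e ->
    exists N, forall t, (N <= t)%N -> data_close s0 xi0 x0 L0 V0 Q0 e (kf (s t)).
Proof.
have bnd p q (zs : nat -> 'M[R]_(p, q)) : bounded_seq zs -> bounded_seq (zs \o kf).
  by move=> [C hC]; exists C => t; exact: hC.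
move=> /bnd bx /bnd bL /bnd bV /bnd bxi /bnd bQ /bnd bxb.
have [_ [s hs [[[[[[_ [x0 cx]] [L0 cL]] [V0 cV]] [xi0 cxi]] [Q0 cQ]] [xb0 cxb]]]] :=
  refine_cvg_subseq bxb (refine_cvg_subseq bQ (refine_cvg_subseq bxi
  (refine_cvg_subseq bV (refine_cvg_subseq bL (refine_cvg_subseq bx stable_subseq_true))))).
exists x0, xi0, xb0, L0, V0, Q0, s => // e e0.
have [N1 h1] := cx e e0; have [N2 h2] := cL e e0; have [N3 h3] := cV e e0.
have [N4 h4] := cxi e e0; have [N5 h5] := cQ e e0; have [N6 h6] := cxb e e0.
exists (maxn N1 (maxn N2 (maxn N3 (maxn N4 (maxn N5 N6))))) => t ht.
by do !split; [apply: h1 | apply: h2 | apply: h3 | apply: h4 | apply: h5 | apply: h6]; lia.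
Qed.

Lemma bounded_multipliers :
  bounded_seq sx -> bounded_seq sL -> bounded_seq sV -> bounded_seq sxi ->
  bounded_seq sQ -> bounded_seq sxb ->
  (forall k, inU (sL k) (sQ k)) -> (forall k, Sk k (sxb k)) ->
  (exists Y, forall k, exists2 yv, mnorm yv <= Y &
     ncone (Sk k) (sxb k) yv /\
     forall lb, Lam g (sx k) (sV k) (sL k) (sxb k) yv lb ->
       Mset g phi (sx k) (sL k) (sV k) (sxi k) (sQ k) (sxb k) lb) ->
  (forall s0 L0 V0 xi0 Q0 x0, cluster_pt sx sL sV sxi sQ sxb s0 L0 V0 xi0 Q0 x0 ->
     bmp g s0 L0 V0 xi0 Q0 x0) ->
  exists khat : nat, exists2 beta : R, 0 < beta & forall k, (khat <= k)%N ->
    exists2 lb, Mset g phi (sx k) (sL k) (sV k) (sxi k) (sQ k) (sxb k) lb & mnorm lb <= beta.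
Proof.
move=> bx bL bV bxi bQ bxb hU hS [Y hY] hbmp; apply: contrapT => hn.
have Y0 : 0 <= Y by have [yv + _] := hY 0%N; apply: le_trans; exact: mnorm_ge0.
have bad j : exists k, (j <= k)%N /\ forall lb,
    Mset g phi (sx k) (sL k) (sV k) (sxi k) (sQ k) (sxb k) lb -> j.+1%:R < mnorm lb.
  apply: contrapT => hj; apply: hn; exists j, j.+1%:R => [|k hk]; first by rewrite ltr0Sn.
  apply: contrapT => hk'; apply: hj; exists k; split => // lb hlb.
  by rewrite ltNge; apply/negP => hle; apply: hk'; exists lb.
have [kf hkf] := choice bad.
have [x0 [xi0 [xb0 [L0 [V0 [Q0 [s hs near]]]]]]] :=
  bounded_data_subseq_cvg kf bx bL bV bxi bQ bxb.
have kf_ge t : (t <= kf (s t))%N by apply: leq_trans (increasing_ge hs t) (hkf _).1.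
have [kap kap0 [d d0 hb]] : bmp g x0 L0 V0 xi0 Q0 xb0.
  apply: hbmp => e e0 N; have [N' hN'] := near e e0.
  by exists (kf (s (maxn N N'))); [exact: leq_trans (leq_maxl _ _) (kf_ge _) |
    exact: hN' _ (leq_maxr N N')].
have [N' hN'] := near d d0; pose t := maxn (Num.bound (kap * Y)) N'.
have [a1 [a2 [a3 [a4 [a5 a6]]]]] := hN' t (leq_maxr _ _); pose k := kf (s t).
have [yv hyv [hnc hM]] := hY k.
have [lb hlb hlbn] := hb _ _ _ _ _ (hU k) a1 a2 a3 a4 a5 _ (hS k) a6 _ hnc.
have := (hkf (s t)).2 lb (hM _ hlb).
have : kap * Y < (s t).+1%:R.
  apply: lt_le_trans (archi_boundP (mulr_ge0 (ltW kap0) Y0)) _.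
  by rewrite ler_nat; apply: leq_trans (leq_maxl _ N') (leq_trans (increasing_ge hs t) _).
have : kap * mnorm yv <= kap * Y by rewrite ler_wpM2l // ltW.
lra.
Qed.

End BoundedMultipliers.

Section Run.
Variables (R : realType) (n m : nat).
Variables (g0 : 'cV[R]_n -> \bar R) (g : 'I_m -> 'cV[R]_n -> R) (phi : 'cV[R]_n -> R)
  (O : set 'cV[R]_n)
  (mumin mumax Lmin Lmax Mq betaC betaS alpha tau : R)
  (x xi : nat -> 'cV[R]_n) (V : nat -> 'M[R]_(n, m))
  (mu : nat -> nat -> R) (L : nat -> nat -> 'cV[R]_m) (Q : nat -> nat -> 'M[R]_n)
  (xbar y v : nat -> nat -> 'cV[R]_n) (lam : nat -> nat -> 'cV[R]_m)
  (jk : nat -> nat).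
Hypothesis SA : standing_assumption g0 g phi O.
Hypothesis RUN : iMBA_run g0 g phi mumin mumax Lmin Lmax Mq betaC betaS alpha tau
  x xi V mu L Q xbar y v lam jk.

Local Notation f0 z := (fine (g0 z)).
Local Notation Fk k j := (Fkj (f0 (x k)) (x k) (xi k) (Q k j) phi).
Local Notation feasible z := (nonpos (gvec g z)).

Lemma Fobj_feasible z : feasible z -> Fobj g0 g phi z = (f0 z + phi z)%:E.
Proof.
move=> hz; rewrite /Fobj asboolT // adde0.
have hf : g0 z \is a fin_num by apply/(sa_g0_fin SA)/(sa_Gamma_sub SA).
by rewrite -(fineK hf) EFinD.
Qed.

Lemma x_feasible k : feasible (x k).
Proof.
elim: k => [|k _]; first exact: (it_x0 RUN).
by rewrite (it_next RUN); case: (it_accept RUN k).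
Qed.

Lemma mumin_gt0 : 0 < mumin.
Proof. by have /andP[] := it_mu RUN. Qed.

Lemma mu_ge_min k j : (j <= jk k)%N -> mumin <= mu k j.
Proof.
elim: j => [|j IH] hj; first by have /andP[] := it_mu0 RUN k.
have := IH (ltnW hj); have := it_tau RUN; have := mumin_gt0.
by have [_] := it_reject RUN hj; case: ifP => _ [_ ->] //; nra.
Qed.

Lemma L_ge0 k j : (j <= jk k)%N -> forall i, 0 <= L k j i 0.
Proof.
have [L0 _] : 0 < Lmin /\ Lmin <= Lmax by apply/andP; exact: (it_L RUN).
elim: j => [|j IH] hj i; first by have /andP [h _] := it_L0 RUN k i; lra.
have := IH (ltnW hj) i; have := it_tau RUN.
by have [_] := it_reject RUN hj; case: ifP => _ [-> _] // ? ?; rewrite mxE mulr_ge0 //; lra.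
Qed.

Lemma Q_psd k j : (j <= jk k)%N -> forall d, 0 <= dot d (Q k j *m d).
Proof.
move=> hj d; have [[_ /(_ d) /andP[h _]] _ _ _ _] := it_inner RUN hj.
by apply: le_trans h; rewrite mulr_ge0 ?sqr_ge0 // (le_trans (ltW mumin_gt0) (mu_ge_min hj)).
Qed.

Lemma accepted_inU k : inU (L k (jk k)) (Q k (jk k)).
Proof.
split; [exact: L_ge0 | | exact: Q_psd].
by have [[] ] := it_inner RUN (leqnn (jk k)).
Qed.

Lemma xbar_normal k j : (j <= jk k)%N ->
  exists w, (forall d, dot w d <= phi (xbar k j + d) - phi (xbar k j)) /\
    forall z, Sset g (x k) (V k) (L k j) z ->
      dot (- (xi k + Q k j *m (xbar k j - x k) + w)) (z - xbar k j) <= 0.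
Proof.
move=> hj; have [[hsym _] [hS hmin _] _ _ _] := it_inner RUN hj.
exact: Fkj_argmin_normal (sa_phi_cvx SA) (Sset_convex (L_ge0 hj)) hsym hS hmin.
Qed.

Lemma descent_step_le Cxi C0 M : (forall k, mnorm (xi k) <= Cxi) ->
  (forall k, mnorm (x k) <= C0) -> (forall z, mnorm z <= C0 + 1 -> `|phi z| <= M) ->
  forall k j z, (j <= jk k)%N -> Fk k j z <= Fk k j (x k) ->
  mnorm (z - x k) <= 1 + 2 * (Cxi + 2 * M) / mumin.
Proof.
move=> hxi hx hM k j z hj hF.
have [[_ /(_ (z - x k)) /andP [hQ _]] _ _ _ _] := it_inner RUN hj.
have hmu := mu_ge_min hj; have m0 := mumin_gt0.
have := @convex_descent_step_le _ _ phi (x k) (z - x k) (xi k) (mu k j) M (sa_phi_cvx SA).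
rewrite (addrC (x k)) subrK => /(_ ltac:(lra)).
move=> /(_ (fun w hw => hM w ltac:(have := hx k; lra))).
have := @Fkj_sub_center _ _ (f0 (x k)) (x k) (xi k) (Q k j) phi z; move=> hd /(_ ltac:(lra)).
move/le_trans; apply; rewrite lerD2l -!mulrA ler_wpM2l //.
have M0 : 0 <= M by apply: le_trans (hM (x 0%N) _); rewrite ?normr_ge0 //; have := hx 0%N; lra.
apply: (@le_trans _ _ ((mnorm (xi k) + 2 * M) / mumin)).
  by apply: ler_wpM2l; [have := mnorm_ge0 (xi k); lra | rewrite lef_pV2 ?posrE //; lra].
by apply: ler_wpM2r; [rewrite invr_ge0; lra | have := hxi k; lra].
Qed.

Section UpperModels.
Variables (r Cg0 Cg : R).
Hypothesis y_near : forall k j, (j <= jk k)%N -> mnorm (y k j - x k) <= r.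
Hypothesis g0_model : forall k z, feasible z -> mnorm (z - x k) <= r ->
  f0 z <= f0 (x k) + dot (xi k) (z - x k) + Cg0 * mnorm (z - x k) ^+ 2.
Hypothesis g_model : forall k i z, mnorm (z - x k) <= r ->
  g i z <= g i (x k) + dot (col i (V k)) (z - x k) + Cg * mnorm (z - x k) ^+ 2.

(* The upper model gives [g_i y <= G_i y + (Cg - L_i / 2) ||y - x||^2], and the
   inexactness test bounds [G_i y] by [betaC / 2 ||y - x||^2]. *)
Lemma y_feasible_of_L_ge k j : (j <= jk k)%N ->
  (forall i, betaC + 2 * Cg <= L k j i 0) -> feasible (y k j).
Proof.
move=> hj hL i; rewrite mxE; have [_ _ _ [_ hres] _] := it_inner RUN hj.
set G := Gfun g _ _ _ _ in hres.
have h1 := entry_le_infnorm_pospart G i.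
have h2 : 0 <= Num.max (- dot (lam k j) G) 0 by rewrite le_max lexx orbT.
have hG := Gfun_entry g (y k j) (x k) (V k) (L k j) i; rewrite -/G in hG.
have he := g_model i (y_near hj).
set D := mnorm (y k j - x k) ^+ 2 in hres hG he.
have D0 : 0 <= D by rewrite /D sqr_ge0.
have := hL i; nra.
Qed.

Lemma mu_lt_of_rejected k j : (j <= jk k)%N -> feasible (y k j) ->
  ~ accepted g0 g phi alpha (x k) (y k j) -> mu k j < alpha + 2 * Cg0.
Proof.
move=> hj hf hna; rewrite ltNge; apply/negP => hmu; apply: hna; split => //.
rewrite !Fobj_feasible //; last exact: x_feasible.
rewrite -EFinB lee_fin.
have [[_ /(_ (y k j - x k)) /andP [hQ _]] _ _ [hF _] _] := it_inner RUN hj.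
have hd := @Fkj_sub_center _ _ (f0 (x k)) (x k) (xi k) (Q k j) phi (y k j).
have he := g0_model hf (y_near hj).
set D := mnorm (y k j - x k) ^+ 2 in hQ he *.
have D0 : 0 <= D by rewrite /D sqr_ge0.
nra.
Qed.

Lemma mu_le k j : (j <= jk k)%N -> mu k j <= Num.max mumax (tau * (alpha + 2 * Cg0)).
Proof.
have t1 := it_tau RUN; elim: j => [|j IH] hj.
  by have /andP [_ h] := it_mu0 RUN k; apply: le_trans h _; rewrite le_max lexx.
have [hna] := it_reject RUN hj; case: ifP => [/asboolP hf|_] [_ ->]; last exact: IH (ltnW hj).
rewrite le_max; apply/orP; right; rewrite ler_pM2l; last lra.
exact/ltW/(mu_lt_of_rejected (ltnW hj) hf hna).
Qed.

Lemma L_scaled k j : (j <= jk k)%N ->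
  exists2 s, 1 <= s <= Num.max 1 (tau * (betaC + 2 * Cg) / Lmin) & L k j = s *: L k 0%N.
Proof.
have t1 := it_tau RUN.
have [L0 _] : 0 < Lmin /\ Lmin <= Lmax by apply/andP; exact: (it_L RUN).
elim: j => [|j IH] hj; first by exists 1; rewrite ?scale1r ?lexx ?le_max ?lexx.
have [s /andP[s1 hs] hLs] := IH (ltnW hj).
have [_] := it_reject RUN hj; case: ifP => [_ [-> _]|hinf [-> _]]; first by exists s; rewrite ?s1.
have [i hi] : exists i, L k j i 0 < betaC + 2 * Cg.
  apply: contrapT => hn; move: hinf; rewrite asboolT //.
  apply: y_feasible_of_L_ge (ltnW hj) _ => i.
  by rewrite leNgt; apply/negP => h; apply: hn; exists i.
exists (tau * s); last by rewrite hLs scalerA.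
have /andP [hl1 _] := it_L0 RUN k i; rewrite hLs mxE in hi.
apply/andP; split; first nra.
rewrite le_max; apply/orP; right; rewrite -mulrA ler_pM2l; last lra.
by rewrite ler_pdivlMr //; nra.
Qed.

End UpperModels.


Section Bounded.
Variable C0 : R.
Hypothesis x_bounded : forall k, mnorm (x k) <= C0.

Lemma feasible_limit zs z : (forall k, feasible (zs k)) -> mx_cvg zs z -> feasible z.
Proof.
move=> hf hz i; rewrite mxE; apply/ler_addgt0Pr => e e0; rewrite add0r.
have [N hN] := loc_lipschitz_cvg (sa_g_lip SA i z) hz e0.
have := hN N (leqnn N); have := hf N i; rewrite mxE /= ltr_norml => h1 /andP [h2 _]; lra.
Qed.

Lemma uniform_on_feasible r (P : R -> 'cV[R]_n -> Prop) :
  (forall z, O z -> exists2 e, 0 < e & exists2 d, 0 < d &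
     forall w, mnorm (w - z) < d -> P e w) ->
  (forall e e' w, 0 < e' -> e' <= e -> P e w -> P e' w) ->
  exists2 e, 0 < e & forall w, feasible w -> mnorm w <= r -> P e w.
Proof.
move=> hloc; apply: uniform_on_ball feasible_limit _ => z hz.
exact/hloc/(sa_Gamma_sub SA).
Qed.

Lemma xi_bounded : exists2 c, 0 <= c & forall k, mnorm (xi k) <= c.
Proof.
have [e e0 he] := uniform_on_feasible C0 (P := fun e w => lip_ball (fun z => f0 z) w e e^-1)
  (fun z hz => loc_lipschitz_near (sa_g0_lip SA hz))
  (fun e e' w e0 ee => lip_ball_le ee (inv_le_inv e0 ee)).
have c0 : 0 <= e^-1 by rewrite invr_ge0 ltW.
exists e^-1 => // k.
exact: lsubdiff_mnorm_le e0 c0 (he _ (x_feasible k) (x_bounded k)) (it_xi RUN k).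
Qed.

Lemma Vcol_bounded : exists2 c, 0 <= c & forall k i, mnorm (col i (V k)) <= c.
Proof.
have [e e0 he] := uniform_on_ball_ord C0 (P := fun i e w => lip_ball (g i) w e e^-1)
  (fun i z => loc_lipschitz_near (sa_g_lip SA i z))
  (fun i e e' w e0 ee => lip_ball_le ee (inv_le_inv e0 ee)).
have c0 : 0 <= e^-1 by rewrite invr_ge0 ltW.
exists e^-1 => // k i.
exact: lsubdiff_mnorm_le e0 c0 (he i _ (x_bounded k)) (it_V RUN k i).
Qed.

Lemma V_bounded : bounded_seq V.
Proof.
have [c c0 hc] := Vcol_bounded; exists ((n * m)%:R * c) => k.
apply: mnorm_le_entries => // a i; apply: le_trans (hc k i).
by have := normr_entry_le (col i (V k)) a 0; rewrite mxE.
Qed.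

Lemma step_bounded : exists2 r, 0 <= r & forall k j z, (j <= jk k)%N ->
  Fk k j z <= Fk k j (x k) -> mnorm (z - x k) <= r.
Proof.
have [c c0 hc] := xi_bounded; have [M M0 hM] := convex_bounded (sa_phi_cvx SA) (C0 + 1).
have hs := descent_step_le hc x_bounded hM.
exists (1 + 2 * (c + 2 * M) / mumin) => //.
have := mumin_gt0 => m0.
have : 0 <= 2 * (c + 2 * M) / mumin by rewrite divr_ge0 //; lra.
lra.
Qed.

Lemma g0_upper_model r : exists Cg0, forall k z, feasible z -> mnorm (z - x k) <= r ->
  f0 z <= f0 (x k) + dot (xi k) (z - x k) + Cg0 * mnorm (z - x k) ^+ 2.
Proof.
have [c c0 hc] := xi_bounded.
have [e e0 he] := uniform_on_feasible C0 (P := fun e w => uC2_ball (fun z => f0 z) w e e^-1)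
  (fun z hz => upper_C2_near (sa_g0_uC2 SA hz))
  (fun e e' w e0 ee => uC2_ball_le ee (inv_le_inv e0 ee)).
have [b b0 hb] := uniform_on_feasible (C0 + r) (P := fun e w => `|f0 w| <= e^-1)
  (fun z hz => loc_lipschitz_bounded_near (sa_g0_lip SA hz))
  (fun e e' w e0 ee h => le_trans h (inv_le_inv e0 ee)).
exists (e^-1 / 2 + (2 * b^-1 + c * r) / (e / 2) ^+ 2) => k z hz hzr.
have hxk := x_bounded k; have hxf := x_feasible k.
have hzC : mnorm z <= C0 + r by have := mnorm_le_add z (x k); lra.
have hxC : mnorm (x k) <= C0 + r by have := mnorm_ge0 (z - x k); lra.
exact: upper_model_uniform e0 (he _ hxf hxk) (it_xi RUN k) (hb _ hz hzC) (hb _ hxf hxC) (hc k) hzr.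
Qed.

Lemma g_upper_model r : exists Cg, forall k i z, mnorm (z - x k) <= r ->
  g i z <= g i (x k) + dot (col i (V k)) (z - x k) + Cg * mnorm (z - x k) ^+ 2.
Proof.
have [c c0 hc] := Vcol_bounded.
have [e e0 he] := uniform_on_ball_ord C0 (P := fun i e w => uC2_ball (g i) w e e^-1)
  (fun i z => upper_C2_near (sa_g_uC2 SA i z))
  (fun i e e' w e0 ee => uC2_ball_le ee (inv_le_inv e0 ee)).
have [b b0 hb] := uniform_on_ball_ord (C0 + r) (P := fun i e w => `|g i w| <= e^-1)
  (fun i z => loc_lipschitz_bounded_near (sa_g_lip SA i z))
  (fun i e e' w e0 ee h => le_trans h (inv_le_inv e0 ee)).
exists (e^-1 / 2 + (2 * b^-1 + c * r) / (e / 2) ^+ 2) => k i z hzr.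
have hxk := x_bounded k.
have hzC : mnorm z <= C0 + r by have := mnorm_le_add z (x k); lra.
have hxC : mnorm (x k) <= C0 + r by have := mnorm_ge0 (z - x k); lra.
exact: upper_model_uniform e0 (he i _ hxk) (it_V RUN k i) (hb i _ hzC) (hb i _ hxC) (hc k i) hzr.
Qed.

Lemma y_near : exists2 r, 0 <= r & forall k j, (j <= jk k)%N -> mnorm (y k j - x k) <= r.
Proof.
have [r r0 hr] := step_bounded; exists r => // k j hj.
by have [_ _ _ [hF _] _] := it_inner RUN hj; apply: hr hj hF.
Qed.

Lemma xbar_near : exists2 r, 0 <= r & forall k, mnorm (xbar k (jk k) - x k) <= r.
Proof.
have [r r0 hr] := step_bounded; exists r => // k; apply: hr (leqnn _) _.
have [_ [_ hmin _] _ _ _] := it_inner RUN (leqnn (jk k)).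
exact/hmin/Sset_center/x_feasible.
Qed.

Lemma xbar_bounded : bounded_seq (fun k => xbar k (jk k)).
Proof.
have [r _ hr] := xbar_near; exists (C0 + r) => k.
by have := mnorm_le_add (xbar k (jk k)) (x k); have := hr k; have := x_bounded k; lra.
Qed.

Lemma L_bounded : bounded_seq (fun k => L k (jk k)).
Proof.
have [r _ hy] := y_near; have [Cg hg] := g_upper_model r.
have [L0 LL] : 0 < Lmin /\ Lmin <= Lmax by apply/andP; exact: (it_L RUN).
exists (Num.max 1 (tau * (betaC + 2 * Cg) / Lmin) * ((m * 1)%:R * Lmax)) => k.
have [s /andP[s1 sS] ->] := L_scaled hy hg (leqnn (jk k)).
rewrite mnormZ ger0_norm; last lra.
apply: ler_pM; [lra | exact: mnorm_ge0 | exact: sS |].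
apply: mnorm_le_entries => [|i j]; first lra.
by rewrite (ord1 j); have /andP[h1 h2] := it_L0 RUN k i; rewrite ger0_norm //; lra.
Qed.

Lemma Q_bounded : bounded_seq (fun k => Q k (jk k)).
Proof.
have [r _ hy] := y_near; have [Cg0 hg0] := g0_upper_model r.
pose MM := Num.max mumax (tau * (alpha + 2 * Cg0)).
exists ((n * n)%:R * (MM + Mq)) => k.
have [[hs hQb] _ _ _ _] := it_inner RUN (leqnn (jk k)).
have hmu := mu_le hy hg0 (leqnn (jk k)); have hmu0 := mu_ge_min (leqnn (jk k)).
have := mumin_gt0; have := it_M RUN; rewrite -/MM in hmu => Mq0 m0.
apply: mnorm_le_entries; first lra.
apply: psd_entry_le hs (Q_psd (leqnn _)) _ => a.
have /andP [_] := hQb (delta_mx a 0).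
by rewrite dot_delta_mulmx -dot_sqr dot_delta mxE !eqxx mulr1; lra.
Qed.

Lemma normals_bounded : exists Y, forall k, exists2 yv, mnorm yv <= Y &
  ncone (Sset g (x k) (V k) (L k (jk k))) (xbar k (jk k)) yv /\
  forall lb, Lam g (x k) (V k) (L k (jk k)) (xbar k (jk k)) yv lb ->
    Mset g phi (x k) (L k (jk k)) (V k) (xi k) (Q k (jk k)) (xbar k (jk k)) lb.
Proof.
have [cx _ hcx] := xi_bounded; have [BQ hBQ] := Q_bounded; have [r r0 hr] := xbar_near.
have [M M0 hM] := convex_bounded (sa_phi_cvx SA) (C0 + r + 1).
exists (cx + BQ * r + 2 * M) => k; set xb := xbar k (jk k).
have [w [hw hn]] := xbar_normal (leqnn (jk k)).
have [_ [hS _ _] _ _ _] := it_inner RUN (leqnn (jk k)).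
have hxb : mnorm xb <= C0 + r.
  by have := mnorm_le_add xb (x k); have := hr k; have := x_bounded k; lra.
exists (- (xi k + Q k (jk k) *m (xb - x k) + w)); last split.
- rewrite mnormN; apply: le_trans (mnormD _ _) _; apply: le_trans (lerD (mnormD _ _) (lexx _)) _.
  have hQx : mnorm (Q k (jk k) *m (xb - x k)) <= BQ * r.
    apply: le_trans (mnorm_mulmx _ _) _.
    by apply: ler_pM; [exact: mnorm_ge0 | exact: mnorm_ge0 | exact: hBQ | exact: hr].
  have : mnorm w <= 2 * M by apply: convex_subgradient_mnorm_le hw => z hz; apply: hM; lra.
  by have := hcx k; lra.
- exact: ncone_of_convex.
- move=> lb [hnc hgrad]; split => //; exists w; first exact: lsubdiff_of_convex.
  by rewrite hgrad subrr.
Qed.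

End Bounded.

End Run.

Theorem proposition4p1 (R : realType) (n m : nat)
  (g0 : 'cV[R]_n -> \bar R) (g : 'I_m -> 'cV[R]_n -> R) (phi : 'cV[R]_n -> R)
  (O : set 'cV[R]_n)
  (mumin mumax Lmin Lmax Mq betaC betaS alpha tau : R)
  (x xi : nat -> 'cV[R]_n) (V : nat -> 'M[R]_(n, m))
  (mu : nat -> nat -> R) (L : nat -> nat -> 'cV[R]_m) (Q : nat -> nat -> 'M[R]_n)
  (xbar y v : nat -> nat -> 'cV[R]_n) (lam : nat -> nat -> 'cV[R]_m)
  (jk : nat -> nat) :
  (* Assumption 1 *)
  standing_assumption g0 g phi O ->
  (* the sequences are generated by Algorithm iMBA *)
  iMBA_run g0 g phi mumin mumax Lmin Lmax Mq betaC betaS alpha tau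
    x xi V mu L Q xbar y v lam jk ->
  (* Assumption 2 *)
  (forall k j, (j <= jk k)%N ->
     msubreg (fun z w => exists2 t : 'cV[R]_m, nonpos t &
                            w = Gfun g z (x k) (V k) (L k j) - t)
             (xbar k j) 0) ->
  (* Assumption 3 *)
  (exists C, forall k, mnorm (x k) <= C) ->
  (* Assumption 4: partial BMP at every cluster point of (u^k, xbar^k) *)
  (forall s0 L0 V0 xi0 Q0 x0,
     cluster_pt x (fun k => L k (jk k)) V xi (fun k => Q k (jk k))
                (fun k => xbar k (jk k)) s0 L0 V0 xi0 Q0 x0 ->
     bmp g s0 L0 V0 xi0 Q0 x0) ->
  exists khat : nat, exists2 beta : R, 0 < beta &
    forall k, (khat <= k)%N ->
      exists2 lb : 'cV[R]_m,
        Mset g phi (x k) (L k (jk k)) (V k) (xi k) (Q k (jk k)) (xbar k (jk k)) lb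
        & mnorm lb <= beta.
Proof.
move=> SA RUN _ [C0 hx] hbmp.
have [cxi _ hxi] := xi_bounded SA RUN hx.
apply: bounded_multipliers hbmp.
- by exists C0.
- exact: (L_bounded SA RUN hx).
- exact: (V_bounded SA RUN hx).
- by exists cxi.
- exact: (Q_bounded SA RUN hx).
- exact: (xbar_bounded SA RUN hx).
- exact: (accepted_inU RUN).
- by move=> k; have [_ [] ] := it_inner RUN (leqnn (jk k)).
- exact: (normals_bounded SA RUN hx).
Qed.
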